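(* Let $T=((\Omega,\mathcal{A}),\{(\Omega,\mathcal{M}_i)\}_{i\in N},\{t_i\}_{i\in N})$ be a type space. Then exactly one of the following holds: (a) the players' beliefs in $T$ are strongly consistent; (b) there exists an acceptable bet in $T$.
   Context: A field on a set $X$ is a collection of subsets of $X$ containing $X$ and closed under complements and finite intersections. For a field $\mathcal{A}$ on $\Omega$, $\mathrm{pba}(\Omega,\mathcal{A})$ is the set of finitely additive nonnegative $P:\mathcal{A}\to\mathbb{R}$ with $P(\Omega)=1$; $\mathrm{ba}(\Omega,\mathcal{A})$ the bounded finitely additive real set functions on $\mathcal{A}$; $B(\Omega,\mathcal{A})$ the sup-norm closure of the linear span of indicators of sets in $\mathcal{A}$. $\mathrm{ba}(\Omega,\mathcal{A})$ carries the weak* topology (weakest making $\mu\mapsto\int f\,d\mu$ continuous for all $f\in B(\Omega,\mathcal{A})$), finite powers $\mathrm{ba}(\Omega,\mathcal{A})^k$ the product topology; $\overline{\,\cdot\,}^\ast$ denotes closure in it. $\mathrm{conv}$ is convex hull, $\mathrm{cone}(C)=\{\beta x:\beta\ge0,x\in C\}$, $\mathrm{diag}\,C^k=\{(x,\dots,x):x\in C\}$. A type space is $T=((\Omega,\mathcal{A}),\{(\Omega,\mathcal{M}_i)\}_{i\in N},\{t_i\}_{i\in N})$ with $N$ a nonempty set of players, fields $\mathcal{M}_i\subseteq\mathcal{A}$ on a set $\Omega$, and $t_i:\Omega\times\mathcal{A}\to[0,1]$ with: $t_i(\omega,\cdot)\in\mathrm{pba}(\Omega,\mathcal{A})$; $t_i(\cdot,E)\in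 B(\Omega,\mathcal{M}_i)$ for all $E\in\mathcal{A}$; $t_i(\omega,E)=1$ whenever $E\in\mathcal{M}_i$, $\omega\in E$. Let $\Pi_i=\overline{\mathrm{conv}\{t_i(\omega,\cdot):\omega\in\Omega\}}^\ast$ and, for $\omega^\ast\in\Omega$, $\Pi_i^{-\omega^\ast}=\overline{\mathrm{conv}\{t_i(\omega,\cdot):\omega\in\Omega,\ t_i(\omega,\cdot)\ne t_i(\omega^\ast,\cdot)\}}^\ast$. The players' beliefs are strongly consistent if for every finite $I\subseteq N$, every $i^\ast\in I$ and every $\omega^\ast\in\Omega$, $t_{i^\ast}(\omega^\ast,\cdot)\in\overline{\mathrm{cone}\big(\prod_{i\in I\setminus\{i^\ast\}}\Pi_i\big)-\mathrm{cone}\big(\mathrm{diag}(\Pi_{i^\ast}^{-\omega^\ast})^{|I|-1}\big)}^\ast$, where $t_{i^\ast}(\omega^\ast,\cdot)$ is identified with the element of $\mathrm{ba}(\Omega,\mathcal{A})^{I\setminus\{i^\ast\}}$ all of whose coordinates equal it. For $I\subseteq N$, a nonempty $S\subseteq\Omega$ is an $I$-common certainty component if there is $E\in\mathcal{A}$ with $E\subseteq S$ and $t_i(\omega,E)=1$ for all $\omega\in S$, $i\in I$; a set $E$ is $I$-commonly certain at $\omega$ if there is such $S$ with $\omega\in S\subseteq E$. A bet is a family $(f_i)_{i\in I}$, $I\subseteq N$ finite, $f_i\in B(\Omega,\mathcal{A})$, with $\sum_{i\in I}f_i(\omega)=0$ for all $\omega$. A bet is acceptable if for every $\omega\in\Omega$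 the set $\{\omega':\int f_i\,dt_i(\omega',\cdot)\ge0\ \forall i\in I\}$ is $I$-commonly certain at $\omega$, and there exist $\omega^\ast\in\Omega$, $i^\ast\in I$ with $\int f_{i^\ast}\,dt_{i^\ast}(\omega^\ast,\cdot)>0$. *)

From Stdlib Require Import Reals List ClassicalEpsilon.
Open Scope R_scope.
Set Implicit Arguments.

(* A set function on subsets of Omega; only its values on the field matter. *)
Definition setfun (Omega : Type) := (Omega -> Prop) -> R.

Definition is_field (X : Type) (F : (X -> Prop) -> Prop) : Prop :=
  F (fun _ => True) /\
  (forall E, F E -> F (fun x => ~ E x)) /\
  (forall E G, F E -> F G -> F (fun x => E x /\ G x)).

Definition fin_additive (X : Type) (A : (X -> Prop) -> Prop) (mu : setfun X) : Prop :=
  forall E G, A E -> A G -> (forall x, E x -> G x -> False) ->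
    mu (fun x => E x \/ G x) = mu E + mu G.

Definition is_pba (X : Type) (A : (X -> Prop) -> Prop) (P : setfun X) : Prop :=
  fin_additive A P /\ (forall E, A E -> 0 <= P E) /\ P (fun _ => True) = 1.

Definition is_ba (X : Type) (A : (X -> Prop) -> Prop) (mu : setfun X) : Prop :=
  fin_additive A mu /\ exists M, forall E, A E -> Rabs (mu E) <= M.

Definition eqA (X : Type) (A : (X -> Prop) -> Prop) (mu nu : setfun X) : Prop :=
  forall E, A E -> mu E = nu E.

Definition indic (X : Type) (E : X -> Prop) (x : X) : R :=
  if excluded_middle_informative (E x) then 1 else 0.

Definition simple_eval (X : Type) (s : list (R * (X -> Prop))) (x : X) : R :=
  fold_right (fun p acc => fst p * indic (snd p) x + acc) 0 s.

Definition simple_in (X : Type) (A : (X -> Prop) -> Prop) (s : list (R * (X -> Prop))) : Prop :=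
  Forall (fun p => A (snd p)) s.

Definition simple_int (X : Type) (mu : setfun X) (s : list (R * (X -> Prop))) : R :=
  fold_right (fun p acc => fst p * mu (snd p) + acc) 0 s.

(* B(Omega, A): sup-norm closure of the span of indicators of sets in A *)
Definition in_B (X : Type) (A : (X -> Prop) -> Prop) (f : X -> R) : Prop :=
  forall eps, 0 < eps -> exists s, simple_in A s /\
    forall x, Rabs (f x - simple_eval s x) <= eps.

Definition is_integral (X : Type) (A : (X -> Prop) -> Prop) (mu : setfun X)
    (f : X -> R) (r : R) : Prop :=
  forall eps, 0 < eps -> exists delta, 0 < delta /\
    forall s, simple_in A s -> (forall x, Rabs (f x - simple_eval s x) <= delta) ->
      Rabs (r - simple_int mu s) <= eps.

(* the integral  \int f dmu  (unique for mu in ba, f in B) *)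
Definition integral (X : Type) (A : (X -> Prop) -> Prop) (mu : setfun X) (f : X -> R) : R :=
  epsilon (inhabits 0) (is_integral A mu f).

(* weak* closure in ba(Omega,A): x in ba, and every basic weak* neighbourhood
   of x meets C *)
Definition wclosure (X : Type) (A : (X -> Prop) -> Prop) (C : setfun X -> Prop)
    (x : setfun X) : Prop :=
  is_ba A x /\
  forall (fs : list (X -> R)) eps, 0 < eps -> Forall (in_B A) fs ->
    exists y, C y /\
      Forall (fun f => Rabs (integral A x f - integral A y f) < eps) fs.

(* closure in the product topology of ba(Omega,A)^J, J a set of indices;
   tuples are functions N -> setfun X, only coordinates in J matter *)
Definition wclosureJ (N X : Type) (A : (X -> Prop) -> Prop) (J : N -> Prop)
    (C : (N -> setfun X) -> Prop) (x : N -> setfun X) : Prop :=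
  (forall j, J j -> is_ba A (x j)) /\
  forall (fs : list (N * (X -> R))) eps, 0 < eps ->
    Forall (fun p => J (fst p) /\ in_B A (snd p)) fs ->
    exists y, C y /\
      Forall (fun p => Rabs (integral A (x (fst p)) (snd p)
                             - integral A (y (fst p)) (snd p)) < eps) fs.

(* convex hull (up to equality on A) *)
Definition conv (X : Type) (A : (X -> Prop) -> Prop) (S : setfun X -> Prop)
    (mu : setfun X) : Prop :=
  exists l : list (R * setfun X),
    Forall (fun p => 0 <= fst p /\ S (snd p)) l /\
    fold_right (fun p acc => fst p + acc) 0 l = 1 /\
    eqA A mu (fun E => fold_right (fun p acc => fst p * snd p E + acc) 0 l).

Definition cone (N X : Type) (C : (N -> setfun X) -> Prop) (x : N -> setfun X) : Prop :=
  x = (fun _ _ => 0) \/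
  exists beta y, 0 <= beta /\ C y /\ x = (fun j E => beta * y j E).

Definition setdiff (N X : Type) (C D : (N -> setfun X) -> Prop) (x : N -> setfun X) : Prop :=
  exists y z, C y /\ D z /\ x = (fun j E => y j E - z j E).

Definition prodJ (N X : Type) (J : N -> Prop) (P : N -> setfun X -> Prop)
    (x : N -> setfun X) : Prop :=
  forall j, J j -> P j (x j).

Definition diagJ (N X : Type) (J : N -> Prop) (P : setfun X -> Prop)
    (x : N -> setfun X) : Prop :=
  exists mu, P mu /\ forall j, J j -> x j = mu.

Definition is_type_space (N Omega : Type) (A : (Omega -> Prop) -> Prop)
    (M : N -> (Omega -> Prop) -> Prop) (t : N -> Omega -> setfun Omega) : Prop :=
  inhabited N /\
  is_field A /\
  (forall i, is_field (M i) /\ forall E, M i E -> A E) /\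
  (forall i w, is_pba A (t i w)) /\
  (forall i E, A E -> in_B (M i) (fun w => t i w E)) /\
  (forall i w E, M i E -> E w -> t i w E = 1).

Definition Pi (N Omega : Type) (A : (Omega -> Prop) -> Prop)
    (t : N -> Omega -> setfun Omega) (i : N) : setfun Omega -> Prop :=
  wclosure A (conv A (fun nu => exists w, nu = t i w)).

Definition Pi_minus (N Omega : Type) (A : (Omega -> Prop) -> Prop)
    (t : N -> Omega -> setfun Omega) (i : N) (wstar : Omega) : setfun Omega -> Prop :=
  wclosure A (conv A (fun nu => exists w, nu = t i w /\ ~ eqA A (t i w) (t i wstar))).

Definition strongly_consistent (N Omega : Type) (A : (Omega -> Prop) -> Prop)
    (t : N -> Omega -> setfun Omega) : Prop :=
  forall (I : list N), NoDup I ->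
  forall istar, In istar I ->
  forall wstar : Omega,
    let J := fun i => In i I /\ i <> istar in
    wclosureJ A J
      (setdiff (cone (prodJ J (Pi A t)))
               (cone (diagJ J (Pi_minus A t istar wstar))))
      (fun _ => t istar wstar).

Definition cc_component (N Omega : Type) (A : (Omega -> Prop) -> Prop)
    (t : N -> Omega -> setfun Omega) (I : list N) (S : Omega -> Prop) : Prop :=
  (exists w, S w) /\
  exists E, A E /\ (forall w, E w -> S w) /\
    forall w i, S w -> In i I -> t i w E = 1.

Definition commonly_certain (N Omega : Type) (A : (Omega -> Prop) -> Prop)
    (t : N -> Omega -> setfun Omega) (I : list N) (E : Omega -> Prop) (w : Omega) : Prop :=
  exists S, cc_component A t I S /\ S w /\ forall w', S w' -> E w'.

Definition is_bet (N Omega : Type) (A : (Omega -> Prop) -> Prop)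
    (I : list N) (f : N -> Omega -> R) : Prop :=
  NoDup I /\ (forall i, In i I -> in_B A (f i)) /\
  forall w, fold_right (fun i acc => f i w + acc) 0 I = 0.

Definition acceptable_bet (N Omega : Type) (A : (Omega -> Prop) -> Prop)
    (t : N -> Omega -> setfun Omega) (I : list N) (f : N -> Omega -> R) : Prop :=
  is_bet A I f /\
  (forall w, commonly_certain A t I
     (fun w' => forall i, In i I -> 0 <= integral A (t i w') (f i)) w) /\
  exists wstar istar, In istar I /\ 0 < integral A (t istar wstar) (f istar).

(* An acceptable bet gives every player a nonnegative expected payoff at every
   state, and some player [is] a positive one at some state [ws].  Strong
   consistency asks [t is ws] to lie in the closure of a set of differences
   [u - z], with [u] in a cone over the beliefs of the other players and [z] on
   a diagonal.  Integrating the payoffs of the other players against [u - z]: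
   each integral against [u] is nonnegative, and against [z] their sum is minus
   the payoff of [is], whose integral is again nonnegative.  Under [t is ws] the
   same sum is negative, so [t is ws] stays away from that set.

   Conversely, if strong consistency fails at [(I, is, ws)], finitely many test
   functions keep [t is ws] at a positive distance from the set, so in R^n the
   convex cone of test vectors is separated from the test vector of [t is ws] by
   a linear functional (Hahn-Banach for a sublinear distance function).
   Regrouping its coordinates by player gives functions [h j] whose sum has
   nonpositive expectation under any joint choice of beliefs of the others,
   nonnegative expectation under the beliefs of [is] other than [t is ws], and
   positive expectation under [t is ws].  Shifting each [h j] by the supremum of
   its expectations then yields an acceptable bet. *)

From Stdlib Require Import Reals List Lra Lia ClassicalEpsilon Classical
  FunctionalExtensionality PropExtensionality.
Open Scope R_scope.

(** * Finite sums *)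

Definition lsum {T : Type} (l : list T) (F : T -> R) : R :=
  fold_right (fun e acc => F e + acc) 0 l.

Definition classic_eq_dec {T : Type} (x y : T) : {x = y} + {x <> y} :=
  excluded_middle_informative (x = y).

Section ListSum.
Context {T : Type}.
Implicit Types (l : list T) (F G : T -> R).

Lemma lsum_app l1 l2 F : lsum (l1 ++ l2) F = lsum l1 F + lsum l2 F.
Proof. induction l1; simpl; [ring|]. rewrite IHl1. ring. Qed.

Lemma lsum_add l F G : lsum l (fun e => F e + G e) = lsum l F + lsum l G.
Proof. induction l; simpl; [ring|]. rewrite IHl. ring. Qed.

Lemma lsum_scal l c F : lsum l (fun e => c * F e) = c * lsum l F.
Proof. induction l; simpl; [ring|]. rewrite IHl. ring. Qed.

Lemma lsum_ext_in l F G : (forall e, In e l -> F e = G e) -> lsum l F = lsum l G.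
Proof.
  induction l; simpl; intros H; auto.
  rewrite H, IHl; auto.
Qed.

Lemma lsum_le l F G : (forall e, In e l -> F e <= G e) -> lsum l F <= lsum l G.
Proof.
  induction l; simpl; intros H; [lra|].
  pose proof (H a (or_introl eq_refl)). pose proof (IHl (fun e He => H e (or_intror He))).
  lra.
Qed.

Lemma lsum_const l c : lsum l (fun _ => c) = INR (length l) * c.
Proof.
  induction l; simpl lsum; simpl length; [simpl; ring|].
  rewrite IHl, S_INR. ring.
Qed.

Lemma lsum_nonneg l F : (forall e, In e l -> 0 <= F e) -> 0 <= lsum l F.
Proof.
  intros H. pose proof (lsum_le l (fun _ => 0) F H) as Hle.
  rewrite lsum_const in Hle. lra.
Qed.

Lemma lsum_term_le l F e : (forall e, In e l -> 0 <= F e) -> In e l -> F e <= lsum l F.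
Proof.
  induction l as [|a l IH]; simpl; intros H He; [tauto|].
  assert (0 <= lsum l F) by (apply lsum_nonneg; auto).
  destruct He as [<-|He]; [lra|].
  pose proof (H a (or_introl eq_refl)). pose proof (IH (fun e He => H e (or_intror He)) He).
  lra.
Qed.

Lemma lsum_nonneg_eq0 l F :
  (forall e, In e l -> 0 <= F e) -> lsum l F = 0 -> forall e, In e l -> F e = 0.
Proof.
  intros H Hs e He. pose proof (lsum_term_le l F e H He). pose proof (H e He). lra.
Qed.

Lemma lsum_abs_le l F c :
  (forall e, In e l -> Rabs (F e) <= c) -> Rabs (lsum l F) <= INR (length l) * c.
Proof.
  induction l; simpl lsum; simpl length; intros H.
  - simpl. rewrite Rabs_R0. lra.
  - rewrite S_INR. eapply Rle_trans; [apply Rabs_triang|].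
    pose proof (H a (or_introl eq_refl)). pose proof (IHl (fun e He => H e (or_intror He))).
    lra.
Qed.

Lemma NoDup_remove_elt l x : NoDup l -> NoDup (remove classic_eq_dec x l).
Proof.
  induction 1 as [|a l Ha Hl IH]; simpl; [constructor|].
  destruct (classic_eq_dec x a); auto.
  constructor; auto. intros Hin. apply in_remove in Hin. tauto.
Qed.

Lemma lsum_remove l x F :
  NoDup l -> In x l -> lsum l F = F x + lsum (remove classic_eq_dec x l) F.
Proof.
  induction 1 as [|a l Ha Hl IH]; simpl; intros Hx; [tauto|].
  destruct (classic_eq_dec x a) as [<-|Hne].
  - rewrite notin_remove; auto.
  - destruct Hx as [->|Hx]; [tauto|]. simpl. rewrite IH; auto. ring.
Qed.

Lemma lsum_indicator l x F :
  NoDup l -> In x l -> lsum l (fun j => if classic_eq_dec x j then F j else 0) = F x.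
Proof.
  induction 1 as [|a l Ha Hl IH]; simpl; intros Hx; [tauto|].
  destruct (classic_eq_dec x a) as [<-|Hne].
  - rewrite (lsum_ext_in l _ (fun _ => 0)), lsum_const; [ring|].
    intros j Hj. destruct (classic_eq_dec x j) as [<-|]; tauto.
  - destruct Hx as [->|Hx]; [tauto|]. rewrite IH; auto. ring.
Qed.
End ListSum.

Lemma lsum_comm {T U : Type} (l : list T) (m : list U) (F : T -> U -> R) :
  lsum l (fun a => lsum m (F a)) = lsum m (fun b => lsum l (fun a => F a b)).
Proof.
  induction l; simpl.
  - rewrite lsum_const. ring.
  - rewrite IHl, <- lsum_add. reflexivity.
Qed.

Lemma lsum_map {T U : Type} (l : list T) (h : T -> U) (F : U -> R) :
  lsum (map h l) F = lsum l (fun e => F (h e)).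
Proof. induction l; simpl; auto. rewrite IHl. reflexivity. Qed.

(* The supremum of [phi j] exists by [completeness]; subtracting it from [b]
   bounds the sums over the remaining indices. *)
Lemma lsum_sup_le {I X : Type} (l : list I) (phi : I -> X -> R) (b : R) (x0 : X) :
  NoDup l -> (forall W : I -> X, lsum l (fun j => phi j (W j)) <= b) ->
  exists c : I -> R, lsum l c <= b /\ forall j x, In j l -> phi j x <= c j.
Proof.
  intros Hl. revert b. induction Hl as [|j l Hj Hl IH]; intros b Hb.
  - exists (fun _ => 0). split; [exact (Hb (fun _ => x0))|simpl; tauto].
  - set (upd := fun (W : I -> X) x i => if classic_eq_dec i j then x else W i).
    assert (Hupd : forall W x, phi j x + lsum l (fun i => phi i (W i)) <= b).
    { intros W x. specialize (Hb (upd W x)). simpl in Hb. unfold upd at 1 in Hb.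
      destruct (classic_eq_dec j j) as [_|]; [|congruence].
      erewrite lsum_ext_in in Hb; [exact Hb|]. intros i Hi. unfold upd.
      destruct (classic_eq_dec i j) as [->|]; tauto. }
    destruct (completeness (fun z => exists x, z = phi j x)) as [s [Hub Hlub]].
    { exists (b - lsum l (fun i => phi i x0)). intros z [x ->].
      specialize (Hupd (fun _ => x0) x). lra. }
    { exists (phi j x0), x0. reflexivity. }
    destruct (IH (b - s)) as [c [Hc Hbound]].
    { intros W. assert (s <= b - lsum l (fun i => phi i (W i))); [|lra].
      apply Hlub. intros z [x ->]. specialize (Hupd W x). lra. }
    exists (fun i => if classic_eq_dec i j then s else c i). split.
    + simpl. destruct (classic_eq_dec j j) as [_|]; [|congruence].
      rewrite (lsum_ext_in l _ c); [lra|].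
      intros i Hi. destruct (classic_eq_dec i j) as [->|]; tauto.
    + intros i x Hi. destruct (classic_eq_dec i j) as [->|Hne].
      * apply Hub. eauto.
      * destruct Hi as [<-|Hi]; [congruence|auto].
Qed.

Lemma lsum_route {I K : Type} (J : list I) (ks : list K) (r : K -> I) (lam : K -> R)
    (X : I -> K -> R) :
  NoDup J -> (forall k, In k ks -> In (r k) J) ->
  lsum J (fun j => lsum ks (fun k => (if classic_eq_dec (r k) j then lam k else 0) * X j k))
  = lsum ks (fun k => lam k * X (r k) k).
Proof.
  intros HJ Hr. rewrite lsum_comm. apply lsum_ext_in. intros k Hk.
  rewrite <- (lsum_indicator J (r k) (fun j => lam k * X j k)) by auto.
  apply lsum_ext_in. intros j _. destruct (classic_eq_dec (r k) j); ring.
Qed.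

(** * Infima *)

(* A junk real unless [S] is nonempty and bounded below. *)
Definition inf (S : R -> Prop) : R := - epsilon (inhabits 0) (is_lub (fun z => S (- z))).

Definition bounded_below (S : R -> Prop) : Prop :=
  (exists z, S z) /\ exists b, forall z, S z -> b <= z.

Lemma inf_is_glb S : bounded_below S ->
  (forall z, S z -> inf S <= z) /\ (forall m, (forall z, S z -> m <= z) -> m <= inf S).
Proof.
  intros [[z0 Hz0] [b Hb]]. unfold inf.
  set (s := epsilon (inhabits 0) (is_lub (fun z => S (- z)))).
  assert (Hs : is_lub (fun z => S (- z)) s).
  { apply epsilon_spec.
    destruct (completeness (fun z => S (- z))) as [m Hm]; eauto.
    - exists (- b). intros z Hz. specialize (Hb _ Hz). lra.
    - exists (- z0). rewrite Ropp_involutive. exact Hz0. }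
  destruct Hs as [Hub Hleast]. split.
  - intros z Hz. assert (- z <= s) by (apply Hub; rewrite Ropp_involutive; exact Hz). lra.
  - intros m Hm. assert (s <= - m); [|lra].
    apply Hleast. intros z Hz. specialize (Hm _ Hz). lra.
Qed.

Lemma inf_le S z : bounded_below S -> S z -> inf S <= z.
Proof. intros HS. apply (inf_is_glb S HS). Qed.

Lemma le_inf S m : (exists z, S z) -> (forall z, S z -> m <= z) -> m <= inf S.
Proof. intros Hne Hm. apply (inf_is_glb S); [split; eauto|exact Hm]. Qed.

Lemma le_inf_add S1 S2 m : (exists z, S1 z) -> (exists z, S2 z) ->
  (forall a b, S1 a -> S2 b -> m <= a + b) -> m <= inf S1 + inf S2.
Proof.
  intros H1 H2 Hm.
  assert (m - inf S1 <= inf S2); [|lra].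
  apply le_inf; auto. intros b Hb.
  assert (m - b <= inf S1); [|lra].
  apply le_inf; auto. intros a Ha. specialize (Hm a b Ha Hb). lra.
Qed.

(** * Hahn-Banach in R^n *)

(* Only the first [n] coordinates matter to [dot n], [norm1 n] and [depends_on n]. *)
Definition vec := nat -> R.
Definition vadd (x y : vec) : vec := fun k => x k + y k.
Definition vsub (x y : vec) : vec := fun k => x k - y k.
Definition vscal (s : R) (x : vec) : vec := fun k => s * x k.
Definition vzero : vec := fun _ => 0.
Definition unitv (m : nat) : vec := fun k => if Nat.eq_dec k m then 1 else 0.

Ltac vec_ring := extensionality k; unfold vadd, vsub, vscal, vzero; ring.

Definition dot (n : nat) (l x : vec) : R := lsum (seq 0 n) (fun k => l k * x k).
Definition norm1 (n : nat) (x : vec) : R := lsum (seq 0 n) (fun k => Rabs (x k)).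

Lemma dot_S n l x : dot (S n) l x = dot n l x + l n * x n.
Proof. unfold dot. rewrite seq_S, lsum_app. simpl. ring. Qed.

Lemma dot_scal n l s x : dot n l (vscal s x) = s * dot n l x.
Proof.
  unfold dot, vscal. rewrite <- lsum_scal. apply lsum_ext_in. intros. ring.
Qed.

Lemma dot_ext n l1 l2 x : (forall k, (k < n)%nat -> l1 k = l2 k) -> dot n l1 x = dot n l2 x.
Proof.
  intros H. apply lsum_ext_in. intros k Hk. apply in_seq in Hk. rewrite H by lia. reflexivity.
Qed.

Definition sublinear (p : vec -> R) : Prop :=
  (forall x y, p (vadd x y) <= p x + p y) /\
  (forall s x, 0 < s -> p (vscal s x) = s * p x).

Definition depends_on (n : nat) (p : vec -> R) : Prop :=
  forall x y, (forall k, (k < n)%nat -> x k = y k) -> p x = p y.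

Lemma sublinear_zero p : sublinear p -> p vzero = 0.
Proof.
  intros [_ Hhom]. assert (E : vscal 2 vzero = vzero) by vec_ring.
  specialize (Hhom 2 vzero ltac:(lra)). rewrite E in Hhom. lra.
Qed.

Lemma sublinear_line p u t : sublinear p -> t * p u <= p (vscal t u).
Proof.
  intros Hp. pose proof (sublinear_zero p Hp) as H0. destruct Hp as [Hsub Hhom].
  destruct (Rtotal_order t 0) as [Hlt|[->|Hgt]].
  - replace (vscal t u) with (vscal (- t) (vscal (-1) u)) by vec_ring.
    rewrite Hhom by lra.
    pose proof (Hsub u (vscal (-1) u)) as Hs.
    replace (vadd u (vscal (-1) u)) with vzero in Hs by vec_ring.
    nra.
  - replace (vscal 0 u) with vzero by vec_ring. lra.
  - rewrite Hhom by lra. lra.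
Qed.

Lemma norm1_sublinear n : sublinear (norm1 n).
Proof.
  unfold norm1. split.
  - intros x y. rewrite <- lsum_add. apply lsum_le. intros k _. apply Rabs_triang.
  - intros s x Hs. rewrite <- lsum_scal. apply lsum_ext_in. intros k _.
    unfold vscal. rewrite Rabs_mult, (Rabs_pos_eq s) by lra. reflexivity.
Qed.

Lemma norm1_depends_on n : depends_on n (norm1 n).
Proof.
  intros x y H. apply lsum_ext_in. intros k Hk. apply in_seq in Hk. rewrite H by lia. reflexivity.
Qed.

(* Pairs [(u, r)] rather than vectors [u] allow subtracting a linear term along
   a direction, as in the extension step of Hahn-Banach. *)
Section InfConvolution.
Variables (p : vec -> R) (K : vec -> R -> Prop).
Hypothesis p_sublinear : sublinear p.
Hypothesis K_zero : K vzero 0.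
Hypothesis K_add : forall u1 r1 u2 r2, K u1 r1 -> K u2 r2 -> K (vadd u1 u2) (r1 + r2).
Hypothesis K_scal : forall s u r, 0 < s -> K u r -> K (vscal s u) (s * r).
Hypothesis K_le : forall u r, K u r -> r <= p u.

Definition inf_conv (x : vec) : R := inf (fun z => exists u r, K u r /\ z = p (vadd x u) - r).

Lemma inf_conv_bounded x : bounded_below (fun z => exists u r, K u r /\ z = p (vadd x u) - r).
Proof.
  split.
  - exists (p (vadd x vzero) - 0), vzero, 0. auto.
  - exists (- p (vscal (-1) x)). intros z (u & r & Hu & ->).
    pose proof (K_le u r Hu) as Hr.
    pose proof (proj1 p_sublinear (vadd x u) (vscal (-1) x)) as H.
    replace (vadd (vadd x u) (vscal (-1) x)) with u in H by vec_ring. lra.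
Qed.

Lemma inf_conv_le x u r : K u r -> inf_conv x <= p (vadd x u) - r.
Proof. intros Hu. apply inf_le; [apply inf_conv_bounded|]. eauto. Qed.

Lemma inf_conv_le_self x : inf_conv x <= p x.
Proof.
  pose proof (inf_conv_le x vzero 0 K_zero) as H.
  replace (vadd x vzero) with x in H by vec_ring. lra.
Qed.

Lemma inf_conv_scal_le s x : 0 < s -> inf_conv (vscal s x) <= s * inf_conv x.
Proof.
  intros Hs. assert (Hdiv : inf_conv (vscal s x) / s <= inf_conv x).
  { apply le_inf; [apply inf_conv_bounded|]. intros z (u & r & Hu & ->).
    pose proof (inf_conv_le (vscal s x) _ _ (K_scal s u r Hs Hu)) as H.
    replace (vadd (vscal s x) (vscal s u)) with (vscal s (vadd x u)) in H by vec_ring.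
    rewrite (proj2 p_sublinear) in H by lra.
    apply Rmult_le_reg_l with s; [lra|]. unfold Rdiv.
    replace (s * (inf_conv (vscal s x) * / s)) with (inf_conv (vscal s x)) by (field; lra).
    lra. }
  apply Rmult_le_compat_l with (r := s) in Hdiv; [|lra].
  replace (s * (inf_conv (vscal s x) / s)) with (inf_conv (vscal s x)) in Hdiv by (field; lra).
  lra.
Qed.

Lemma inf_conv_sublinear : sublinear inf_conv.
Proof.
  split.
  - intros x y. apply le_inf_add; try apply inf_conv_bounded.
    intros a b (u1 & r1 & Hu1 & ->) (u2 & r2 & Hu2 & ->).
    pose proof (inf_conv_le (vadd x y) _ _ (K_add _ _ _ _ Hu1 Hu2)) as H.
    pose proof (proj1 p_sublinear (vadd x u1) (vadd y u2)) as Hsub.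
    replace (vadd (vadd x u1) (vadd y u2)) with (vadd (vadd x y) (vadd u1 u2)) in Hsub by vec_ring.
    lra.
  - intros s x Hs. apply Rle_antisym; [apply inf_conv_scal_le; exact Hs|].
    pose proof (inf_conv_scal_le (/ s) (vscal s x) ltac:(apply Rinv_0_lt_compat; lra)) as H.
    replace (vscal (/ s) (vscal s x)) with x in H by (extensionality k; unfold vscal; field; lra).
    apply Rmult_le_compat_l with (r := s) in H; [|lra].
    replace (s * (/ s * inf_conv (vscal s x))) with (inf_conv (vscal s x)) in H by (field; lra).
    exact H.
Qed.

Lemma inf_conv_depends_on n : depends_on n p -> depends_on n inf_conv.
Proof.
  intros Hp x y Hxy. unfold inf_conv. f_equal.
  extensionality z. apply propositional_extensionality.
  split; intros (u & r & Hu & ->); exists u, r; split; auto; f_equal; apply Hp;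
    intros k Hk; unfold vadd; rewrite Hxy; auto.
Qed.
End InfConvolution.

Definition zero_at (m : nat) (x : vec) : vec := fun k => if Nat.eq_dec k m then 0 else x k.

(* Coordinate [m] gets the value [c = p (unitv m)]; the remaining coordinates
   come from a functional below the inf-convolution of [p] along that axis. *)
Lemma hahn_banach n p : sublinear p -> depends_on n p -> exists l, forall x, dot n l x <= p x.
Proof.
  revert p. induction n as [|m IH]; intros p Hp Hd.
  - exists vzero. intros x. unfold dot. simpl.
    rewrite (Hd x vzero) by (intros; lia). rewrite sublinear_zero by exact Hp. lra.
  - set (c := p (unitv m)).
    set (K := fun u r => exists t, u = vscal t (unitv m) /\ r = t * c).
    assert (HK0 : K vzero 0) by (exists 0; split; [vec_ring|ring]).
    assert (HKle : forall u r, K u r -> r <= p u)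
      by (intros u r [t [-> ->]]; apply sublinear_line; exact Hp).
    set (q := inf_conv p K).
    assert (Hq : sublinear q).
    { apply inf_conv_sublinear; auto.
      - intros u1 r1 u2 r2 [t1 [-> ->]] [t2 [-> ->]]. exists (t1 + t2). split; [vec_ring|ring].
      - intros s u r _ [t [-> ->]]. exists (s * t). split; [vec_ring|ring]. }
    set (p' := fun x => q (zero_at m x)).
    assert (Hp' : sublinear p').
    { destruct Hq as [Hq1 Hq2]. unfold p'. split.
      - intros x y. replace (zero_at m (vadd x y)) with (vadd (zero_at m x) (zero_at m y)).
        + apply Hq1.
        + extensionality k. unfold zero_at, vadd. destruct (Nat.eq_dec k m); ring.
      - intros s x Hs. replace (zero_at m (vscal s x)) with (vscal s (zero_at m x)).
        + apply Hq2; exact Hs.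
        + extensionality k. unfold zero_at, vscal. destruct (Nat.eq_dec k m); ring. }
    assert (Hd' : depends_on m p').
    { intros x y Hxy. unfold p', q. apply (inf_conv_depends_on p K (S m) Hd).
      intros k Hk. unfold zero_at. destruct (Nat.eq_dec k m); auto. apply Hxy. lia. }
    destruct (IH p' Hp' Hd') as [l' Hl'].
    exists (fun k => if Nat.eq_dec k m then c else l' k). intros x.
    rewrite dot_S, (dot_ext m _ l') by (intros k Hk; destruct (Nat.eq_dec k m); [lia|auto]).
    destruct (Nat.eq_dec m m) as [_|]; [|congruence].
    assert (Hle : q (zero_at m x) <= p (vadd (zero_at m x) (vscal (x m) (unitv m))) - x m * c)
      by (apply inf_conv_le; auto; exists (x m); auto).
    replace (vadd (zero_at m x) (vscal (x m) (unitv m))) with x in Hle.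
    + specialize (Hl' x). unfold p' in Hl'. lra.
    + extensionality k. unfold vadd, zero_at, vscal, unitv.
      destruct (Nat.eq_dec k m); subst; ring.
Qed.

(* Applying [hahn_banach] to the inf-convolution of [p] along the ray through
   [a] makes the functional negative at [-a]. *)
Lemma sublinear_separation n p a : sublinear p -> depends_on n p -> 0 < p a ->
  exists l, (forall x, dot n l x <= p x) /\ 0 < dot n l a.
Proof.
  intros Hp Hd Ha.
  set (K := fun u r => exists t, 0 <= t /\ u = vscal t a /\ r = t * p a).
  assert (HK0 : K vzero 0) by (exists 0; repeat split; [lra|vec_ring|ring]).
  assert (HKle : forall u r, K u r -> r <= p u)
    by (intros u r [t [_ [-> ->]]]; apply sublinear_line; exact Hp).
  assert (Hq : sublinear (inf_conv p K)).
  { apply inf_conv_sublinear; auto.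
    - intros u1 r1 u2 r2 [t1 [H1 [-> ->]]] [t2 [H2 [-> ->]]].
      exists (t1 + t2). repeat split; [lra|vec_ring|ring].
    - intros s u r Hs [t [Ht [-> ->]]]. exists (s * t). repeat split; [nra|vec_ring|ring]. }
  destruct (hahn_banach n (inf_conv p K) Hq (inf_conv_depends_on p K n Hd)) as [l Hl].
  exists l. split.
  - intros x. eapply Rle_trans; [apply Hl|]. apply inf_conv_le_self; auto.
  - assert (Hneg : inf_conv p K (vscal (-1) a) <= p (vadd (vscal (-1) a) (vscal 1 a)) - 1 * p a)
      by (apply inf_conv_le; auto; exists 1; repeat split; lra).
    replace (vadd (vscal (-1) a) (vscal 1 a)) with vzero in Hneg by vec_ring.
    rewrite sublinear_zero in Hneg by exact Hp.
    pose proof (Hl (vscal (-1) a)) as H. rewrite dot_scal in H. lra.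
Qed.

Lemma cone_separation n (C : vec -> Prop) a eps :
  C vzero ->
  (forall c1 c2, C c1 -> C c2 -> C (vadd c1 c2)) ->
  (forall s c, 0 < s -> C c -> C (vscal s c)) ->
  0 < eps -> (forall c, C c -> eps <= norm1 n (vsub a c)) ->
  exists l, (forall c, C c -> dot n l c <= 0) /\ 0 < dot n l a.
Proof.
  intros HC0 HCadd HCscal Heps Hfar.
  set (K := fun u r => r = 0 /\ exists c, C c /\ u = vscal (-1) c).
  assert (HK0 : K vzero 0) by (split; auto; exists vzero; split; [auto|vec_ring]).
  assert (HKle : forall u r, K u r -> r <= norm1 n u).
  { intros u r [-> _]. apply lsum_nonneg. intros. apply Rabs_pos. }
  set (dist := inf_conv (norm1 n) K).
  assert (Hdist : sublinear dist).
  { apply inf_conv_sublinear; auto using norm1_sublinear.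
    - intros u1 r1 u2 r2 [-> [c1 [H1 ->]]] [-> [c2 [H2 ->]]].
      split; [ring|]. exists (vadd c1 c2). split; [auto|vec_ring].
    - intros s u r Hs [-> [c [Hc ->]]].
      split; [ring|]. exists (vscal s c). split; [auto|vec_ring]. }
  assert (Hdist_a : eps <= dist a).
  { apply le_inf.
    - exists (norm1 n (vadd a vzero) - 0), vzero, 0. auto.
    - intros z (u & r & [-> [c [Hc ->]]] & ->).
      replace (vadd a (vscal (-1) c)) with (vsub a c) by vec_ring.
      specialize (Hfar c Hc). lra. }
  destruct (sublinear_separation n dist a Hdist
              (inf_conv_depends_on _ K n (norm1_depends_on n)) ltac:(lra)) as [l [Hl Hla]].
  exists l. split; auto.
  intros c Hc. eapply Rle_trans; [apply Hl|].
  assert (Hle : dist c <= norm1 n (vadd c (vscal (-1) c)) - 0)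
    by (apply inf_conv_le; auto using norm1_sublinear; split; eauto).
  replace (vadd c (vscal (-1) c)) with vzero in Hle by vec_ring.
  unfold norm1, vzero in Hle. rewrite Rabs_R0, lsum_const in Hle. lra.
Qed.

(** * Integration against bounded charges *)

Lemma set_ext {X : Type} (P Q : X -> Prop) : (forall x, P x <-> Q x) -> P = Q.
Proof. intros H. extensionality x. apply propositional_extensionality. apply H. Qed.

Lemma eq_of_abs_le_mult x y C : 0 <= C -> (forall d, 0 < d -> Rabs (x - y) <= C * d) -> x = y.
Proof.
  intros HC H. destruct (Req_dec x y) as [|Hne]; auto. exfalso.
  assert (Hpos : 0 < Rabs (x - y)) by (apply Rabs_pos_lt; lra).
  specialize (H (Rabs (x - y) / (2 * (C + 1))) ltac:(apply Rdiv_lt_0_compat; lra)).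
  assert (C * (Rabs (x - y) / (2 * (C + 1))) < Rabs (x - y)); [|lra].
  apply Rmult_lt_reg_r with (2 * (C + 1)); [lra|].
  replace (C * (Rabs (x - y) / (2 * (C + 1))) * (2 * (C + 1))) with (C * Rabs (x - y))
    by (field; lra).
  nra.
Qed.

Lemma Rabs_le_inv x y : Rabs x <= y -> - y <= x <= y.
Proof. pose proof (Rle_abs x). pose proof (Rle_abs (- x)). rewrite Rabs_Ropp in *. lra. Qed.

Section Integration.
Context {Omega : Type} (A : (Omega -> Prop) -> Prop).
Hypothesis HA : is_field A.
Implicit Types (mu nu : setfun Omega) (f g : Omega -> R) (s : list (R * (Omega -> Prop))).

Lemma A_true : A (fun _ => True).
Proof. apply HA. Qed.

Lemma A_compl E : A E -> A (fun x => ~ E x).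
Proof. apply HA. Qed.

Lemma A_inter E G : A E -> A G -> A (fun x => E x /\ G x).
Proof. apply HA. Qed.

Lemma A_empty : A (fun _ => False).
Proof.
  replace (fun _ : Omega => False) with (fun x : Omega => ~ (fun _ : Omega => True) x)
    by (apply set_ext; tauto).
  apply A_compl, A_true.
Qed.

Lemma A_union E G : A E -> A G -> A (fun x => E x \/ G x).
Proof.
  intros HE HG.
  replace (fun x => E x \/ G x) with (fun x => ~ ((fun z => ~ E z) x /\ (fun z => ~ G z) x))
    by (apply set_ext; intros x; tauto).
  apply A_compl, A_inter; apply A_compl; auto.
Qed.

Lemma fin_additive_empty mu : fin_additive A mu -> mu (fun _ => False) = 0.
Proof.
  intros H. pose proof (H _ _ A_empty A_empty (fun x a b => a)) as H1. cbv beta in H1.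
  replace (fun _ : Omega => False \/ False) with (fun _ : Omega => False) in H1
    by (apply set_ext; tauto).
  lra.
Qed.

Lemma fin_additive_split mu F E : fin_additive A mu -> A F -> A E ->
  mu F = mu (fun x => F x /\ E x) + mu (fun x => F x /\ ~ E x).
Proof.
  intros H HF HE.
  rewrite <- H; [|apply A_inter; auto|apply A_inter; auto; apply A_compl; auto|tauto].
  f_equal. apply set_ext. intros x. tauto.
Qed.

Lemma pba_is_ba mu : is_pba A mu -> is_ba A mu.
Proof.
  intros [Hfa [Hpos Htot]]. split; auto. exists 1. intros E HE.
  rewrite (fin_additive_split mu (fun _ => True) E Hfa A_true HE) in Htot.
  replace (fun x => True /\ E x) with E in Htot by (apply set_ext; tauto).
  pose proof (Hpos E HE). pose proof (Hpos _ (A_inter _ _ A_true (A_compl E HE))).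
  rewrite Rabs_right; lra.
Qed.

Definition sfun := list (R * (Omega -> Prop)).

Definition sscal (c : R) (s : sfun) : sfun := map (fun p => (c * fst p, snd p)) s.

Lemma simple_eval_app (s1 s2 : sfun) x :
  simple_eval (s1 ++ s2) x = simple_eval s1 x + simple_eval s2 x.
Proof. induction s1; simpl; [ring|]. rewrite IHs1. ring. Qed.

Lemma simple_int_app mu (s1 s2 : sfun) :
  simple_int mu (s1 ++ s2) = simple_int mu s1 + simple_int mu s2.
Proof. induction s1; simpl; [ring|]. rewrite IHs1. ring. Qed.

Lemma simple_eval_sscal c s x : simple_eval (sscal c s) x = c * simple_eval s x.
Proof. induction s; simpl; [ring|]. rewrite IHs. ring. Qed.

Lemma simple_int_sscal mu c s : simple_int mu (sscal c s) = c * simple_int mu s.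
Proof. induction s; simpl; [ring|]. rewrite IHs. ring. Qed.

Lemma simple_in_sscal c s : simple_in A s -> simple_in A (sscal c s).
Proof. induction 1; simpl; constructor; auto. Qed.

Lemma simple_int_eqA mu nu s : simple_in A s -> eqA A mu nu -> simple_int mu s = simple_int nu s.
Proof. intros Hs He. induction Hs; simpl; auto. rewrite IHHs, He; auto. Qed.

Definition simple_int_on (mu : setfun Omega) (s : sfun) (F : Omega -> Prop) : R :=
  lsum s (fun p => fst p * mu (fun x => snd p x /\ F x)).

Lemma simple_int_on_split mu s F E : fin_additive A mu -> simple_in A s -> A F -> A E ->
  simple_int_on mu s F
  = simple_int_on mu s (fun x => F x /\ E x) + simple_int_on mu s (fun x => F x /\ ~ E x).
Proof.
  intros Hmu Hs HF HE. unfold simple_int_on. rewrite <- lsum_add.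
  apply lsum_ext_in. intros [c G] HG. unfold simple_in in Hs. rewrite Forall_forall in Hs.
  specialize (Hs _ HG).
  simpl in *. rewrite (fin_additive_split mu (fun x => G x /\ F x) E) by auto using A_inter.
  replace (fun x => (G x /\ F x) /\ E x) with (fun x => G x /\ F x /\ E x)
    by (apply set_ext; tauto).
  replace (fun x => (G x /\ F x) /\ ~ E x) with (fun x => G x /\ F x /\ ~ E x)
    by (apply set_ext; tauto).
  ring.
Qed.

Lemma const_variation mu F a d : fin_additive A mu -> A F -> (forall x, F x -> Rabs a <= d) ->
  exists P Q, A P /\ A Q /\ (forall x, P x -> F x) /\ (forall x, Q x -> F x) /\
    Rabs (a * mu F) <= d * (mu P - mu Q).
Proof.
  intros Hmu HF Hb. destruct (classic (exists x, F x)) as [[x0 Hx0]|Hne].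
  - specialize (Hb x0 Hx0). destruct (Rle_dec 0 (mu F)).
    + exists F, (fun _ => False). repeat split; auto using A_empty; try tauto.
      rewrite fin_additive_empty, Rabs_mult, (Rabs_right (mu F)) by (auto; lra).
      rewrite Rminus_0_r. apply Rmult_le_compat_r; auto.
    + exists (fun _ => False), F. repeat split; auto using A_empty; try tauto.
      rewrite fin_additive_empty, Rabs_mult, (Rabs_left (mu F)) by (auto; lra).
      rewrite Rminus_0_l. apply Rmult_le_compat_r; lra.
  - replace F with (fun _ : Omega => False)
      by (apply set_ext; intros x; split; [tauto|intros Hx; apply Hne; eauto]).
    exists (fun _ => False), (fun _ => False). repeat split; auto using A_empty.
    rewrite fin_additive_empty by auto. rewrite Rmult_0_r, Rabs_R0. lra.
Qed.

(* [P] and [Q] collect the cells of the partition of [F] generated by the sets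
   of [s] on which [mu] is nonnegative, resp. negative. *)
Lemma simple_int_on_variation mu s : fin_additive A mu -> simple_in A s ->
  forall F a d, A F -> (forall x, F x -> Rabs (a + simple_eval s x) <= d) ->
  exists P Q, A P /\ A Q /\ (forall x, P x -> F x) /\ (forall x, Q x -> F x) /\
    Rabs (a * mu F + simple_int_on mu s F) <= d * (mu P - mu Q).
Proof.
  intros Hmu Hs. induction Hs as [|[c E] s HE Hs IH]; intros F a d HF Hb; simpl in *.
  - unfold simple_int_on. simpl. rewrite Rplus_0_r.
    apply const_variation; auto.
    intros x Fx. specialize (Hb x Fx). rewrite Rplus_0_r in Hb. exact Hb.
  - set (F1 := fun x => F x /\ E x). set (F2 := fun x => F x /\ ~ E x).
    assert (HF1 : A F1) by (apply A_inter; auto).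
    assert (HF2 : A F2) by (apply A_inter; auto; apply A_compl; auto).
    destruct (IH F1 (a + c) d HF1) as (P1 & Q1 & HP1 & HQ1 & SP1 & SQ1 & B1).
    { intros x [Fx Ex]. specialize (Hb x Fx). unfold indic in Hb.
      destruct (excluded_middle_informative (E x)); [|tauto].
      replace (a + c + simple_eval s x) with (a + (c * 1 + simple_eval s x)) by ring. auto. }
    destruct (IH F2 a d HF2) as (P2 & Q2 & HP2 & HQ2 & SP2 & SQ2 & B2).
    { intros x [Fx Ex]. specialize (Hb x Fx). unfold indic in Hb.
      destruct (excluded_middle_informative (E x)); [tauto|].
      replace (a + simple_eval s x) with (a + (c * 0 + simple_eval s x)) by ring. auto. }
    assert (Hdisj : forall P1 P2 : Omega -> Prop, (forall x, P1 x -> F1 x) ->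
                      (forall x, P2 x -> F2 x) -> forall x, P1 x -> P2 x -> False)
      by (intros R1 R2 S1 S2 x X1 X2; apply S1 in X1; apply S2 in X2; unfold F1, F2 in *; tauto).
    exists (fun x => P1 x \/ P2 x), (fun x => Q1 x \/ Q2 x).
    repeat split; try (apply A_union; auto).
    + intros x [H|H]; [apply SP1 in H|apply SP2 in H]; apply H.
    + intros x [H|H]; [apply SQ1 in H|apply SQ2 in H]; apply H.
    + rewrite (Hmu P1 P2), (Hmu Q1 Q2) by eauto.
      unfold simple_int_on. simpl. fold (simple_int_on mu s F).
      rewrite (simple_int_on_split mu s F E), (fin_additive_split mu F E) by auto.
      replace (fun x => E x /\ F x) with F1 by (apply set_ext; unfold F1; tauto).
      fold F1 F2.
      replace (a * (mu F1 + mu F2) + (c * mu F1 + (simple_int_on mu s F1 + simple_int_on mu s F2)))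
        with ((a + c) * mu F1 + simple_int_on mu s F1 + (a * mu F2 + simple_int_on mu s F2))
        by ring.
      eapply Rle_trans; [apply Rabs_triang|]. lra.
Qed.

Lemma simple_int_bound mu M s d : fin_additive A mu -> (forall E, A E -> Rabs (mu E) <= M) ->
  simple_in A s -> 0 <= d -> (forall x, Rabs (simple_eval s x) <= d) ->
  Rabs (simple_int mu s) <= 2 * M * d.
Proof.
  intros Hmu HM Hs Hd Hb.
  destruct (simple_int_on_variation mu s Hmu Hs (fun _ => True) 0 d A_true)
    as (P & Q & HP & HQ & _ & _ & B).
  { intros x _. rewrite Rplus_0_l. auto. }
  replace (simple_int_on mu s (fun _ => True)) with (simple_int mu s) in B.
  - pose proof (HM P HP) as HMP. pose proof (HM Q HQ) as HMQ.
    apply Rabs_le_inv in HMP. apply Rabs_le_inv in HMQ. rewrite Rmult_0_l, Rplus_0_l in B. nra.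
  - unfold simple_int_on. apply lsum_ext_in. intros p _.
    replace (fun x => snd p x /\ True) with (snd p) by (apply set_ext; tauto). reflexivity.
Qed.

Definition approx (f : Omega -> R) (s : sfun) (d : R) : Prop :=
  simple_in A s /\ forall x, Rabs (f x - simple_eval s x) <= d.

Lemma is_integral_unique mu f r1 r2 :
  in_B A f -> is_integral A mu f r1 -> is_integral A mu f r2 -> r1 = r2.
Proof.
  intros Hf H1 H2. apply eq_of_abs_le_mult with 2; [lra|]. intros e He.
  destruct (H1 e He) as [d1 [Hd1 K1]]. destruct (H2 e He) as [d2 [Hd2 K2]].
  destruct (Hf (Rmin d1 d2) ltac:(apply Rmin_glb_lt; auto)) as [s [Hs Happ]].
  specialize (K1 s Hs ltac:(intros x; eapply Rle_trans; [apply Happ|apply Rmin_l])).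
  specialize (K2 s Hs ltac:(intros x; eapply Rle_trans; [apply Happ|apply Rmin_r])).
  replace (r1 - r2) with ((r1 - simple_int mu s) + - (r2 - simple_int mu s)) by ring.
  eapply Rle_trans; [apply Rabs_triang|]. rewrite Rabs_Ropp. lra.
Qed.

Lemma integral_eq mu f r : in_B A f -> is_integral A mu f r -> integral A mu f = r.
Proof.
  intros Hf H. apply (is_integral_unique mu f); auto.
  unfold integral. apply epsilon_spec. eauto.
Qed.

Lemma approx_lin a b f g s1 s2 d1 d2 : approx f s1 d1 -> approx g s2 d2 ->
  approx (fun x => a * f x + b * g x) (sscal a s1 ++ sscal b s2) (Rabs a * d1 + Rabs b * d2).
Proof.
  intros [Hs1 B1] [Hs2 B2]. split.
  - apply Forall_app. split; apply simple_in_sscal; auto.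
  - intros x. rewrite simple_eval_app, !simple_eval_sscal.
    replace (a * f x + b * g x - (a * simple_eval s1 x + b * simple_eval s2 x))
      with (a * (f x - simple_eval s1 x) + b * (g x - simple_eval s2 x)) by ring.
    eapply Rle_trans; [apply Rabs_triang|]. rewrite !Rabs_mult.
    specialize (B1 x). specialize (B2 x). pose proof (Rabs_pos a). pose proof (Rabs_pos b).
    apply Rplus_le_compat; apply Rmult_le_compat_l; auto.
Qed.

Lemma approx_lipschitz mu M f s1 s2 d1 d2 :
  fin_additive A mu -> (forall E, A E -> Rabs (mu E) <= M) -> 0 <= d1 -> 0 <= d2 ->
  approx f s1 d1 -> approx f s2 d2 ->
  Rabs (simple_int mu s1 - simple_int mu s2) <= 2 * M * (d1 + d2).
Proof.
  intros Hmu HM Hd1 Hd2 [Hs1 B1] [Hs2 B2].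
  replace (simple_int mu s1 - simple_int mu s2) with (simple_int mu (s1 ++ sscal (-1) s2))
    by (rewrite simple_int_app, simple_int_sscal; ring).
  apply simple_int_bound; auto; [|lra|].
  - apply Forall_app. split; [|apply simple_in_sscal]; auto.
  - intros x. rewrite simple_eval_app, simple_eval_sscal.
    replace (simple_eval s1 x + -1 * simple_eval s2 x)
      with ((f x - simple_eval s2 x) + - (f x - simple_eval s1 x)) by ring.
    eapply Rle_trans; [apply Rabs_triang|]. rewrite Rabs_Ropp.
    specialize (B1 x). specialize (B2 x). lra.
Qed.

(* The integral is the infimum of the upper estimates [simple_int mu s + K d];
   [approx_lipschitz] bounds them from below. *)
Lemma ba_integral_approx mu : is_ba A mu -> exists K, 0 < K /\
  forall f s d, in_B A f -> 0 <= d -> approx f s d ->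
    Rabs (integral A mu f - simple_int mu s) <= K * d.
Proof.
  intros [Hmu [M HM]].
  assert (HM0 : 0 <= M)
    by (pose proof (HM _ A_true); pose proof (Rabs_pos (mu (fun _ => True))); lra).
  exists (2 * M + 1). split; [lra|]. intros f s d Hf Hd Hs.
  set (S := fun z => exists s d, 0 <= d /\ approx f s d /\ z = simple_int mu s + (2 * M + 1) * d).
  assert (Hbound : forall s d, 0 <= d -> approx f s d ->
                     Rabs (inf S - simple_int mu s) <= (2 * M + 1) * d).
  { destruct (Hf 1 ltac:(lra)) as [s0 Hs0].
    assert (HS : bounded_below S).
    { split.
      - exists (simple_int mu s0 + (2 * M + 1) * 1), s0, 1. split; [lra|split; [exact Hs0|auto]].
      - exists (simple_int mu s0 - (2 * M + 1)). intros z (s' & d' & Hd' & Hs' & ->).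
        pose proof (approx_lipschitz mu M f s' s0 d' 1 Hmu HM Hd' ltac:(lra) Hs' Hs0) as L.
        apply Rabs_le_inv in L. nra. }
    intros s' d' Hd' Hs'. apply Rabs_le. split.
    - assert (simple_int mu s' - (2 * M + 1) * d' <= inf S); [|lra].
      apply le_inf; [apply HS|]. intros z (s'' & d'' & Hd'' & Hs'' & ->).
      pose proof (approx_lipschitz mu M f s'' s' d'' d' Hmu HM Hd'' Hd' Hs'' Hs') as L.
      apply Rabs_le_inv in L. nra.
    - assert (inf S <= simple_int mu s' + (2 * M + 1) * d'); [|lra].
      apply inf_le; [apply HS|]. exists s', d'. auto. }
  rewrite (integral_eq mu f (inf S) Hf); auto.
  intros e He. exists (e / (2 * M + 1)). split; [apply Rdiv_lt_0_compat; lra|].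
  intros s' Hs' B'. eapply Rle_trans.
  - apply Hbound; [|split; eauto]. apply Rlt_le, Rdiv_lt_0_compat; lra.
  - right. field. lra.
Qed.

Lemma integral_spec mu f : is_ba A mu -> in_B A f -> is_integral A mu f (integral A mu f).
Proof.
  intros Hba Hf e He. destruct (ba_integral_approx mu Hba) as [K [HK Happ]].
  exists (e / K). split; [apply Rdiv_lt_0_compat; auto|].
  intros s Hs B. eapply Rle_trans.
  - apply Happ; [auto| |split; eauto]. apply Rlt_le, Rdiv_lt_0_compat; auto.
  - right. field. lra.
Qed.

Lemma in_B_lin a b f g : in_B A f -> in_B A g -> in_B A (fun x => a * f x + b * g x).
Proof.
  intros Hf Hg e He. pose proof (Rabs_pos a). pose proof (Rabs_pos b).
  set (d := e / (Rabs a + Rabs b + 1)).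
  assert (Hd : 0 < d) by (apply Rdiv_lt_0_compat; lra).
  destruct (Hf d Hd) as [s1 Hs1]. destruct (Hg d Hd) as [s2 Hs2].
  destruct (approx_lin a b f g s1 s2 d d Hs1 Hs2) as [Hs B].
  exists (sscal a s1 ++ sscal b s2). split; auto. intros x. eapply Rle_trans; [apply B|].
  assert (d * (Rabs a + Rabs b + 1) = e) by (unfold d; field; lra). nra.
Qed.

Lemma integral_lin mu a b f g : is_ba A mu -> in_B A f -> in_B A g ->
  integral A mu (fun x => a * f x + b * g x) = a * integral A mu f + b * integral A mu g.
Proof.
  intros Hba Hf Hg. destruct (ba_integral_approx mu Hba) as [K [HK Happ]].
  pose proof (Rabs_pos a). pose proof (Rabs_pos b).
  apply eq_of_abs_le_mult with (2 * K * (Rabs a + Rabs b)); [nra|]. intros d Hd.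
  destruct (Hf d Hd) as [s1 Hs1]. destruct (Hg d Hd) as [s2 Hs2].
  pose proof (Happ f s1 d Hf (Rlt_le _ _ Hd) Hs1) as E1.
  pose proof (Happ g s2 d Hg (Rlt_le _ _ Hd) Hs2) as E2.
  pose proof (Happ _ _ (Rabs a * d + Rabs b * d) (in_B_lin a b f g Hf Hg) ltac:(nra)
                (approx_lin a b f g s1 s2 d d Hs1 Hs2)) as E.
  rewrite simple_int_app, !simple_int_sscal in E.
  replace (integral A mu (fun x => a * f x + b * g x) - (a * integral A mu f + b * integral A mu g))
    with ((integral A mu (fun x => a * f x + b * g x)
           - (a * simple_int mu s1 + b * simple_int mu s2))
          + (- a) * (integral A mu f - simple_int mu s1)
          + (- b) * (integral A mu g - simple_int mu s2))
    by ring.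
  eapply Rle_trans; [apply Rabs_triang|].
  eapply Rle_trans; [apply Rplus_le_compat_r, Rabs_triang|].
  rewrite !Rabs_mult, !Rabs_Ropp.
  assert (Rabs a * Rabs (integral A mu f - simple_int mu s1) <= Rabs a * (K * d))
    by (apply Rmult_le_compat_l; auto).
  assert (Rabs b * Rabs (integral A mu g - simple_int mu s2) <= Rabs b * (K * d))
    by (apply Rmult_le_compat_l; auto).
  nra.
Qed.

Lemma approx_const c : approx (fun _ => c) ((c, fun _ => True) :: nil) 0.
Proof.
  split; [constructor; [apply A_true|constructor]|].
  intros x. simpl. unfold indic. destruct (excluded_middle_informative True); [|tauto].
  replace (c - (c * 1 + 0)) with 0 by ring. rewrite Rabs_R0. lra.
Qed.

Lemma in_B_const c : in_B A (fun _ => c).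
Proof. intros e He. exists ((c, fun _ => True) :: nil). destruct (approx_const c) as [Hs B].
  split; auto. intros x. specialize (B x). lra. Qed.

Lemma integral_const mu c : is_ba A mu -> integral A mu (fun _ => c) = c * mu (fun _ => True).
Proof.
  intros Hba. destruct (ba_integral_approx mu Hba) as [K [HK Happ]].
  pose proof (Happ _ _ 0 (in_B_const c) (Rle_refl 0) (approx_const c)) as E.
  simpl in E. rewrite Rmult_0_r in E. apply Rabs_le_inv in E. lra.
Qed.

Lemma in_B_scal c f : in_B A f -> in_B A (fun x => c * f x).
Proof.
  intros Hf. replace (fun x => c * f x) with (fun x => c * f x + 0 * f x)
    by (extensionality x; ring).
  apply in_B_lin; auto.
Qed.

Lemma integral_scal mu c f : is_ba A mu -> in_B A f ->
  integral A mu (fun x => c * f x) = c * integral A mu f.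
Proof.
  intros Hba Hf. replace (fun x => c * f x) with (fun x => c * f x + 0 * f x)
    by (extensionality x; ring).
  rewrite integral_lin; auto. ring.
Qed.

Lemma in_B_lsum {I : Type} (l : list I) (F : I -> Omega -> R) :
  (forall j, In j l -> in_B A (F j)) -> in_B A (fun x => lsum l (fun j => F j x)).
Proof.
  induction l as [|j l IH]; intros HF; simpl; [apply in_B_const|].
  replace (fun x => F j x + lsum l (fun j => F j x))
    with (fun x => 1 * F j x + 1 * lsum l (fun j => F j x)) by (extensionality x; ring).
  apply in_B_lin; [apply HF; simpl; auto|apply IH; intros; apply HF; simpl; auto].
Qed.

Lemma integral_lsum {I : Type} mu (l : list I) (F : I -> Omega -> R) :
  is_ba A mu -> (forall j, In j l -> in_B A (F j)) ->
  integral A mu (fun x => lsum l (fun j => F j x)) = lsum l (fun j => integral A mu (F j)).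
Proof.
  intros Hba. induction l as [|j l IH]; intros HF; simpl.
  - rewrite integral_const; auto. ring.
  - replace (fun x => F j x + lsum l (fun j => F j x))
      with (fun x => 1 * F j x + 1 * lsum l (fun j => F j x)) by (extensionality x; ring).
    rewrite integral_lin, IH; auto; [ring|intros; apply HF; simpl; auto|apply HF; simpl; auto|].
    apply in_B_lsum. intros; apply HF; simpl; auto.
Qed.

Lemma in_B_sub_const f c : in_B A f -> in_B A (fun x => f x - c).
Proof.
  intros Hf. replace (fun x => f x - c) with (fun x => 1 * f x + (- c) * (fun _ => 1) x)
    by (extensionality x; ring).
  apply in_B_lin; auto using in_B_const.
Qed.

Lemma in_B_const_sub c f : in_B A f -> in_B A (fun x => c - f x).
Proof.
  intros Hf. replace (fun x => c - f x) with (fun x => c * (fun _ => 1) x + (- 1) * f x)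
    by (extensionality x; ring).
  apply in_B_lin; auto using in_B_const.
Qed.

Lemma integral_sub_const mu f c : is_pba A mu -> in_B A f ->
  integral A mu (fun x => f x - c) = integral A mu f - c.
Proof.
  intros Hmu Hf. pose proof (pba_is_ba mu Hmu) as Hba.
  replace (fun x => f x - c) with (fun x => 1 * f x + (- c) * (fun _ => 1) x)
    by (extensionality x; ring).
  rewrite integral_lin, integral_const by auto using in_B_const.
  destruct Hmu as [_ [_ ->]]. ring.
Qed.

Lemma integral_const_sub mu c f : is_pba A mu -> in_B A f ->
  integral A mu (fun x => c - f x) = c - integral A mu f.
Proof.
  intros Hmu Hf. pose proof (pba_is_ba mu Hmu) as Hba.
  replace (fun x => c - f x) with (fun x => c * (fun _ => 1) x + (- 1) * f x)
    by (extensionality x; ring).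
  rewrite integral_lin, integral_const by auto using in_B_const.
  destruct Hmu as [_ [_ ->]]. ring.
Qed.

Lemma simple_int_lin_mu mu1 mu2 a b s :
  simple_int (fun E => a * mu1 E + b * mu2 E) s = a * simple_int mu1 s + b * simple_int mu2 s.
Proof. induction s; simpl; [ring|]. rewrite IHs. ring. Qed.

Lemma is_integral_lin_mu mu1 mu2 a b f r1 r2 :
  is_integral A mu1 f r1 -> is_integral A mu2 f r2 ->
  is_integral A (fun E => a * mu1 E + b * mu2 E) f (a * r1 + b * r2).
Proof.
  intros H1 H2 e He. pose proof (Rabs_pos a). pose proof (Rabs_pos b).
  set (e' := e / (Rabs a + Rabs b + 1)).
  assert (He' : 0 < e') by (apply Rdiv_lt_0_compat; lra).
  destruct (H1 e' He') as [d1 [Hd1 K1]]. destruct (H2 e' He') as [d2 [Hd2 K2]].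
  exists (Rmin d1 d2). split; [apply Rmin_glb_lt; auto|].
  intros s Hs B. rewrite simple_int_lin_mu.
  specialize (K1 s Hs ltac:(intros x; eapply Rle_trans; [apply B|apply Rmin_l])).
  specialize (K2 s Hs ltac:(intros x; eapply Rle_trans; [apply B|apply Rmin_r])).
  replace (a * r1 + b * r2 - (a * simple_int mu1 s + b * simple_int mu2 s))
    with (a * (r1 - simple_int mu1 s) + b * (r2 - simple_int mu2 s)) by ring.
  eapply Rle_trans; [apply Rabs_triang|]. rewrite !Rabs_mult.
  assert (Rabs a * Rabs (r1 - simple_int mu1 s) <= Rabs a * e') by (apply Rmult_le_compat_l; auto).
  assert (Rabs b * Rabs (r2 - simple_int mu2 s) <= Rabs b * e') by (apply Rmult_le_compat_l; auto).
  assert (e' * (Rabs a + Rabs b + 1) = e) by (unfold e'; field; lra).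
  nra.
Qed.

Lemma is_ba_lin mu1 mu2 a b : is_ba A mu1 -> is_ba A mu2 ->
  is_ba A (fun E => a * mu1 E + b * mu2 E).
Proof.
  intros [Hf1 [M1 HM1]] [Hf2 [M2 HM2]]. split.
  - intros E G HE HG D. rewrite Hf1, Hf2 by auto. ring.
  - exists (Rabs a * M1 + Rabs b * M2). intros E HE.
    eapply Rle_trans; [apply Rabs_triang|]. rewrite !Rabs_mult.
    apply Rplus_le_compat; apply Rmult_le_compat_l; auto using Rabs_pos.
Qed.

Lemma integral_lin_mu mu1 mu2 a b f : is_ba A mu1 -> is_ba A mu2 -> in_B A f ->
  integral A (fun E => a * mu1 E + b * mu2 E) f = a * integral A mu1 f + b * integral A mu2 f.
Proof.
  intros H1 H2 Hf. apply integral_eq; auto.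
  apply is_integral_lin_mu; apply integral_spec; auto.
Qed.

Lemma is_ba_eqA mu nu : eqA A mu nu -> is_ba A mu -> is_ba A nu.
Proof.
  intros He [Hfa [M HM]]. split.
  - intros E G HE HG D. rewrite <- !He by auto using A_union. auto.
  - exists M. intros E HE. rewrite <- He; auto.
Qed.

Lemma integral_eqA mu nu f : eqA A mu nu -> integral A mu f = integral A nu f.
Proof.
  intros He. unfold integral. f_equal. extensionality r. apply propositional_extensionality.
  split; intros H e Hee; destruct (H e Hee) as [d [Hd K]]; exists d; split; auto;
    intros s Hs B;
    [rewrite <- (simple_int_eqA mu nu s Hs He)|rewrite (simple_int_eqA mu nu s Hs He)];
    auto.
Qed.

Lemma is_ba_zero : is_ba A (fun _ => 0).
Proof.
  split; [intros E G _ _ _; ring|].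
  exists 0. intros E _. rewrite Rabs_R0. lra.
Qed.

Lemma integral_zero_measure f : in_B A f -> integral A (fun _ => 0) f = 0.
Proof.
  intros Hf. apply integral_eq; auto. intros eps Heps. exists 1. split; [lra|].
  intros s _ _. replace (simple_int (fun _ => 0) s) with 0.
  - rewrite Rminus_0_r, Rabs_R0. lra.
  - induction s; simpl; auto. rewrite <- IHs. ring.
Qed.

(* The combinations in [conv] are [mcomb l (fun nu => nu)], unfolded. *)
Definition mcomb {X : Type} (L : list (R * X)) (G : X -> setfun Omega) : setfun Omega :=
  fun E => lsum L (fun e => fst e * G (snd e) E).

Lemma mcomb_integral {X : Type} (L : list (R * X)) G f :
  (forall e, In e L -> is_ba A (G (snd e))) -> in_B A f ->
  is_ba A (mcomb L G) /\
  integral A (mcomb L G) f = lsum L (fun e => fst e * integral A (G (snd e)) f).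
Proof.
  intros HG Hf. induction L as [|e L IH]; simpl.
  - exact (conj is_ba_zero (integral_zero_measure f Hf)).
  - destruct IH as [IH1 IH2]; [intros; apply HG; simpl; auto|].
    assert (He : is_ba A (G (snd e))) by (apply HG; simpl; auto).
    replace (mcomb (e :: L) G) with (fun E => fst e * G (snd e) E + 1 * mcomb L G E)
      by (extensionality E; unfold mcomb; simpl; ring).
    split; [apply is_ba_lin; auto|].
    rewrite integral_lin_mu, IH2; auto. ring.
Qed.

End Integration.

(** * Convex hulls and cones *)

Section ConvexHull.
Context {Omega : Type} (A : (Omega -> Prop) -> Prop).
Hypothesis HA : is_field A.
Implicit Types (mu nu : setfun Omega) (S : setfun Omega -> Prop).

Lemma conv_is_ba S mu : (forall nu, S nu -> is_ba A nu) -> conv A S mu -> is_ba A mu.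
Proof.
  intros HS (l & Hl & _ & He). apply is_ba_eqA with (mcomb l (fun nu => nu)); auto.
  - intros E HE. symmetry. apply He; auto.
  - apply (mcomb_integral A HA l (fun nu => nu) (fun _ => 0)); [|apply in_B_const; auto].
    intros e He'. rewrite Forall_forall in Hl. apply HS, Hl, He'.
Qed.

Lemma wclosure_of_conv S mu :
  (forall nu, S nu -> is_ba A nu) -> conv A S mu -> wclosure A (conv A S) mu.
Proof.
  intros HS Hc. split; [apply conv_is_ba with S; auto|].
  intros fs e He _. exists mu. split; auto. rewrite Forall_forall. intros f _.
  rewrite Rminus_diag, Rabs_R0. exact He.
Qed.

Lemma wclosure_conv_integral_nonneg S f mu :
  (forall nu, S nu -> is_ba A nu) -> in_B A f -> (forall nu, S nu -> 0 <= integral A nu f) ->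
  wclosure A (conv A S) mu -> 0 <= integral A mu f.
Proof.
  intros HS Hf Hpos [_ Hcl]. apply Rnot_lt_le. intros Hneg.
  destruct (Hcl (f :: nil) (- integral A mu f / 2) ltac:(lra) ltac:(repeat constructor; auto))
    as (y & (l & Hl & _ & He) & Hclose).
  inversion Hclose as [|? ? Hy _]; subst.
  rewrite Forall_forall in Hl.
  assert (0 <= integral A y f).
  { rewrite (integral_eqA A y (mcomb l (fun nu => nu)) f He).
    rewrite (proj2 (mcomb_integral A HA l (fun nu => nu) f
                      (fun e Hin => HS _ (proj2 (Hl e Hin))) Hf)).
    apply lsum_nonneg. intros [c nu] Hin. destruct (Hl _ Hin) as [Hc Hnu]. simpl in *.
    apply Rmult_le_pos; auto. }
  apply Rabs_def2 in Hy. lra.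
Qed.

Lemma mcomb_zero_weights {X : Type} (L : list (R * X)) (G : X -> setfun Omega) :
  (forall e, In e L -> 0 <= fst e) -> lsum L fst = 0 -> mcomb L G = fun _ => 0.
Proof.
  intros Hn Hz. extensionality E. unfold mcomb.
  rewrite (lsum_ext_in L _ (fun _ => 0)); [rewrite lsum_const; ring|].
  intros e He. rewrite (lsum_nonneg_eq0 L fst Hn Hz e He). ring.
Qed.

Lemma mcomb_normalized_in_wclosure {X : Type} S (L : list (R * X)) (G : X -> setfun Omega) :
  (forall nu, S nu -> is_ba A nu) -> (forall e, In e L -> 0 <= fst e /\ S (G (snd e))) ->
  0 < lsum L fst -> wclosure A (conv A S) (fun E => mcomb L G E / lsum L fst).
Proof.
  intros HS HL HB. apply wclosure_of_conv; auto.
  exists (map (fun e => (fst e / lsum L fst, G (snd e))) L). split; [|split].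
  - rewrite Forall_forall. intros p Hp. apply in_map_iff in Hp as [e [<- He]]. simpl.
    destruct (HL e He) as [He0 HeS]. split; auto.
    apply Rmult_le_pos; auto. left. apply Rinv_0_lt_compat; auto.
  - change (lsum (map (fun e => (fst e / lsum L fst, G (snd e))) L) fst = 1).
    rewrite lsum_map. simpl. unfold Rdiv. rewrite (lsum_ext_in L _ (fun e => / lsum L fst * fst e))
      by (intros; ring).
    rewrite lsum_scal. field. lra.
  - intros E _.
    change (mcomb L G E / lsum L fst
            = lsum (map (fun e => (fst e / lsum L fst, G (snd e))) L) (fun p => fst p * snd p E)).
    rewrite lsum_map. unfold mcomb, Rdiv. rewrite Rmult_comm, <- lsum_scal. simpl.
    apply lsum_ext_in. intros. ring.
Qed.

Lemma mcomb_in_cone_prod {N X : Type} (J : N -> Prop) (S : N -> setfun Omega -> Prop)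
    (L : list (R * X)) (G : N -> X -> setfun Omega) :
  (forall j nu, S j nu -> is_ba A nu) -> (forall e, In e L -> 0 <= fst e) ->
  (forall j e, J j -> In e L -> S j (G j (snd e))) ->
  cone (prodJ J (fun j => wclosure A (conv A (S j)))) (fun j => mcomb L (G j)).
Proof.
  intros HS Hn HG. destruct (Req_dec (lsum L fst) 0) as [Hz|Hnz].
  - left. extensionality j. apply mcomb_zero_weights; auto.
  - assert (HB : 0 < lsum L fst) by (pose proof (lsum_nonneg L fst Hn); lra).
    right. exists (lsum L fst), (fun j E => mcomb L (G j) E / lsum L fst).
    split; [lra|split].
    + intros j Hj. apply mcomb_normalized_in_wclosure; [apply HS| |auto].
      intros e He. split; auto.
    + extensionality j. extensionality E. field. lra.
Qed.

Lemma mcomb_in_cone_diag {N X : Type} (J : N -> Prop) S (L : list (R * X)) (G : X -> setfun Omega) :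
  (forall nu, S nu -> is_ba A nu) -> (forall e, In e L -> 0 <= fst e /\ S (G (snd e))) ->
  cone (diagJ J (wclosure A (conv A S))) (fun _ : N => mcomb L G).
Proof.
  intros HS HL. destruct (Req_dec (lsum L fst) 0) as [Hz|Hnz].
  - left. extensionality j. apply mcomb_zero_weights; auto. apply HL.
  - assert (HB : 0 < lsum L fst)
      by (pose proof (lsum_nonneg L fst (fun e He => proj1 (HL e He))); lra).
    right. exists (lsum L fst), (fun _ E => mcomb L G E / lsum L fst).
    split; [lra|split].
    + exists (fun E => mcomb L G E / lsum L fst). split; auto.
      apply mcomb_normalized_in_wclosure; auto.
    + extensionality j. extensionality E. field. lra.
Qed.
End ConvexHull.

Section Cones.
Context {N Omega : Type} (A : (Omega -> Prop) -> Prop).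
Hypothesis HA : is_field A.

Definition ray (P : setfun Omega -> Prop) (mu : setfun Omega) : Prop :=
  mu = (fun _ => 0) \/ exists beta nu, 0 <= beta /\ P nu /\ mu = (fun E => beta * nu E).

Lemma cone_prod_ray (J : N -> Prop) P u j : cone (prodJ J P) u -> J j -> ray (P j) (u j).
Proof.
  intros [->|(beta & y & Hb & Hy & ->)] Hj; [left; reflexivity|].
  right. exists beta, (y j). auto.
Qed.

Lemma cone_diag_ray (J : N -> Prop) P z :
  cone (diagJ J P) z -> exists mu, ray P mu /\ forall j, J j -> z j = mu.
Proof.
  intros [->|(beta & y & Hb & (nu & Hnu & Hy) & ->)].
  - exists (fun _ => 0). split; [left|]; reflexivity.
  - exists (fun E => beta * nu E). split.
    + right. exists beta, nu. auto.
    + intros j Hj. rewrite Hy; auto.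
Qed.

Lemma ray_integral_nonneg P g mu : in_B A g ->
  (forall nu, P nu -> is_ba A nu /\ 0 <= integral A nu g) -> ray P mu ->
  is_ba A mu /\ 0 <= integral A mu g.
Proof.
  intros Hg HP [->|(beta & nu & Hb & Hnu & ->)].
  - split; [apply is_ba_zero|]. rewrite integral_zero_measure; auto. lra.
  - destruct (HP nu Hnu) as [Hba Hpos].
    replace (fun E => beta * nu E) with (fun E => beta * nu E + 0 * nu E)
      by (extensionality E; ring).
    split; [apply is_ba_lin; auto|].
    rewrite integral_lin_mu by auto. nra.
Qed.
End Cones.

(** * Bets and strong consistency *)

Section TypeSpace.
Context {N Omega : Type} (A : (Omega -> Prop) -> Prop) (M : N -> (Omega -> Prop) -> Prop)
  (t : N -> Omega -> setfun Omega).
Hypothesis HT : is_type_space A M t.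

Lemma type_space_field : is_field A.
Proof. apply HT. Qed.

Lemma belief_pba i w : is_pba A (t i w).
Proof. apply HT. Qed.

Lemma belief_ba i w : is_ba A (t i w).
Proof. apply pba_is_ba, belief_pba. apply type_space_field. Qed.

Definition others (I : list N) (i : N) : list N := remove classic_eq_dec i I.

Lemma in_others I i j : In j (others I i) <-> In j I /\ j <> i.
Proof.
  split; [apply in_remove|]. intros [Hj Hne]. apply in_in_remove; auto.
Qed.

Lemma acceptable_bet_nonneg I f : acceptable_bet A t I f ->
  forall w i, In i I -> 0 <= integral A (t i w) (f i).
Proof.
  intros [_ [Hcc _]] w i Hi. destruct (Hcc w) as (S & _ & Sw & HS). exact (HS w Sw i Hi).
Qed.

(* The whole state space is a common certainty component, since every belief
   gives probability one to the sure event. *)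
Lemma acceptable_bet_of_nonneg I f : is_bet A I f ->
  (forall w i, In i I -> 0 <= integral A (t i w) (f i)) ->
  (exists w i, In i I /\ 0 < integral A (t i w) (f i)) -> acceptable_bet A t I f.
Proof.
  intros Hbet Hnonneg Hpos. split; [exact Hbet|split; [|exact Hpos]].
  intros w. exists (fun _ => True). split; [|split; auto].
  split; [exists w; auto|]. exists (fun _ => True).
  split; [apply A_true, type_space_field|split; auto].
  intros w' i _ _. apply belief_pba.
Qed.

Definition consistency_set (I : list N) (is : N) (ws : Omega) : (N -> setfun Omega) -> Prop :=
  setdiff (cone (prodJ (fun i => In i I /\ i <> is) (Pi A t)))
          (cone (diagJ (fun i => In i I /\ i <> is) (Pi_minus A t is ws))).

Lemma bet_integral_others I f is mu : is_bet A I f -> In is I -> is_ba A mu ->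
  lsum (others I is) (fun j => integral A mu (f j)) = - integral A mu (f is).
Proof.
  intros [HnD [HfB Hsum]] HisI Hmu. pose proof type_space_field as HA.
  rewrite <- integral_lsum by (auto; intros j Hj; apply in_others in Hj; apply HfB, Hj).
  replace (fun w => lsum (others I is) (fun j => f j w)) with (fun w => -1 * f is w).
  - rewrite integral_scal; auto. ring.
  - extensionality w. specialize (Hsum w). change (lsum I (fun i => f i w) = 0) in Hsum.
    rewrite (lsum_remove I is) in Hsum by auto. unfold others. lra.
Qed.

Lemma Pi_integral_nonneg i g nu : in_B A g -> (forall w, 0 <= integral A (t i w) g) ->
  Pi A t i nu -> is_ba A nu /\ 0 <= integral A nu g.
Proof.
  intros Hg Hpos Hnu. split; [apply Hnu|].
  apply (wclosure_conv_integral_nonneg A type_space_field (fun nu => exists w, nu = t i w));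
    auto; intros nu' [w ->]; auto using belief_ba.
Qed.

Lemma Pi_minus_integral_nonneg i ws g nu : in_B A g -> (forall w, 0 <= integral A (t i w) g) ->
  Pi_minus A t i ws nu -> is_ba A nu /\ 0 <= integral A nu g.
Proof.
  intros Hg Hpos Hnu. split; [apply Hnu|].
  apply (wclosure_conv_integral_nonneg A type_space_field
           (fun nu => exists w, nu = t i w /\ ~ eqA A (t i w) (t i ws)));
    auto; intros nu' [w [-> _]]; auto using belief_ba.
Qed.

(* The payoff of player [is] is minus the sum of the others', so the diagonal
   part of [y] enters with the favourable sign. *)
Lemma consistency_set_integral_nonneg I is ws f y : is_bet A I f -> In is I ->
  (forall w i, In i I -> 0 <= integral A (t i w) (f i)) -> consistency_set I is ws y ->
  0 <= lsum (others I is) (fun j => integral A (y j) (f j)).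
Proof.
  intros Hbet HisI Hacc (u & z & Hu & Hz & ->). pose proof type_space_field as HA.
  pose proof (proj1 (proj2 Hbet)) as HfB.
  destruct (cone_diag_ray _ _ _ Hz) as (zeta & Hzeta & Hzj).
  destruct (ray_integral_nonneg A HA _ (f is) zeta (HfB is HisI)
              (fun nu => Pi_minus_integral_nonneg is ws (f is) nu (HfB is HisI)
                           (fun w => Hacc w is HisI)) Hzeta) as [Hzb Hz0].
  assert (Hu' : forall j, In j (others I is) -> is_ba A (u j) /\ 0 <= integral A (u j) (f j)).
  { intros j Hj. apply in_others in Hj.
    apply (ray_integral_nonneg A HA (Pi A t j)); [apply HfB, Hj| |].
    - intros nu. apply Pi_integral_nonneg; [apply HfB, Hj|]. intros w. apply Hacc, Hj.
    - apply (cone_prod_ray (fun i => In i I /\ i <> is)); auto. }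
  rewrite (lsum_ext_in _ _ (fun j => integral A (u j) (f j) + -1 * integral A zeta (f j))).
  - rewrite lsum_add, lsum_scal, bet_integral_others by auto.
    pose proof (lsum_nonneg _ _ (fun j Hj => proj2 (Hu' j Hj))). lra.
  - intros j Hj. rewrite Hzj by (apply in_others, Hj).
    replace (fun E => u j E - zeta E) with (fun E => 1 * u j E + -1 * zeta E)
      by (extensionality E; ring).
    apply in_others in Hj as HJ.
    rewrite (integral_lin_mu A HA (u j) zeta 1 (-1) (f j) (proj1 (Hu' j Hj)) Hzb
               (HfB j (proj1 HJ))).
    ring.
Qed.

Lemma bet_not_strongly_consistent :
  (exists I f, acceptable_bet A t I f) -> ~ strongly_consistent A t.
Proof.
  intros (I & f & Hbet) HSC. pose proof (acceptable_bet_nonneg I f Hbet) as Hacc.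
  destruct Hbet as [Hbet [_ (ws & is & HisI & Hpos)]].
  set (rho := integral A (t is ws) (f is)) in *.
  specialize (HSC I (proj1 Hbet) is HisI ws). destruct HSC as [_ Hcl].
  set (len := INR (length (others I is))). assert (Hlen : 0 <= len) by apply pos_INR.
  set (eps := rho / (2 * (len + 1))).
  assert (Heps : 0 < eps) by (apply Rdiv_lt_0_compat; lra).
  destruct (Hcl (map (fun j => (j, f j)) (others I is)) eps Heps) as (y & Hy & Hclose).
  { rewrite Forall_forall. intros p Hp. apply in_map_iff in Hp as [j [<- Hj]].
    apply in_others in Hj. split; [exact Hj|apply Hbet, Hj]. }
  rewrite Forall_forall in Hclose.
  assert (Hbound : Rabs (lsum (others I is) (fun j => integral A (t is ws) (f j)
                                          + -1 * integral A (y j) (f j))) <= len * eps).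
  { apply lsum_abs_le. intros j Hj. left.
    replace (integral A (t is ws) (f j) + -1 * integral A (y j) (f j))
      with (integral A (t is ws) (f j) - integral A (y j) (f j)) by ring.
    apply (Hclose (j, f j)), in_map_iff. eauto. }
  rewrite lsum_add, lsum_scal, bet_integral_others in Hbound by auto using belief_ba.
  pose proof (consistency_set_integral_nonneg I is ws f y Hbet HisI Hacc Hy).
  assert (len * eps < rho).
  { unfold eps. apply Rmult_lt_reg_r with (2 * (len + 1)); [lra|].
    replace (len * (rho / (2 * (len + 1))) * (2 * (len + 1))) with (len * rho) by (field; lra).
    nra. }
  fold rho in Hbound. apply Rabs_le_inv in Hbound. lra.
Qed.

Definition separating_family (I : list N) (is : N) (ws : Omega) (h : N -> Omega -> R) : Prop :=
  (forall j, In j (others I is) -> in_B A (h j)) /\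
  (forall W : N -> Omega, lsum (others I is) (fun j => integral A (t j (W j)) (h j)) <= 0) /\
  (forall w, ~ eqA A (t is w) (t is ws) ->
     0 <= lsum (others I is) (fun j => integral A (t is w) (h j))) /\
  0 < lsum (others I is) (fun j => integral A (t is ws) (h j)).

(* Player [j] receives [c j - h j], where [c j] will bound the expectation of
   [h j] under all of [j]'s beliefs; player [is] takes the other side. *)
Definition shifted_bet (I : list N) (is : N) (h : N -> Omega -> R) (c : N -> R) :
    N -> Omega -> R :=
  fun i => if classic_eq_dec i is
           then fun w => lsum (others I is) (fun j => h j w) - lsum (others I is) c
           else fun w => c i - h i w.

Lemma shifted_bet_is_bet I is h c : NoDup I -> In is I ->
  (forall j, In j (others I is) -> in_B A (h j)) -> is_bet A I (shifted_bet I is h c).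
Proof.
  intros HnD HisI HhB. pose proof type_space_field as HA. split; [exact HnD|split].
  - intros i Hi. unfold shifted_bet. destruct (classic_eq_dec i is) as [->|Hne].
    + apply in_B_sub_const; auto. apply in_B_lsum; auto.
    + apply in_B_const_sub; auto. apply HhB, in_others; auto.
  - intros w. change (lsum I (fun i => shifted_bet I is h c i w) = 0).
    rewrite (lsum_remove I is) by auto. fold (others I is).
    rewrite (lsum_ext_in _ _ (fun j => c j + -1 * h j w)), lsum_add, lsum_scal.
    + unfold shifted_bet. destruct (classic_eq_dec is is); [ring|congruence].
    + intros j Hj. apply in_others in Hj. unfold shifted_bet.
      destruct (classic_eq_dec j is); [tauto|ring].
Qed.

Lemma shifted_bet_payoff_is I is h c w : (forall j, In j (others I is) -> in_B A (h j)) ->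
  integral A (t is w) (shifted_bet I is h c is)
  = lsum (others I is) (fun j => integral A (t is w) (h j)) - lsum (others I is) c.
Proof.
  intros HhB. pose proof type_space_field as HA. unfold shifted_bet.
  destruct (classic_eq_dec is is) as [_|]; [|congruence].
  rewrite integral_sub_const, integral_lsum; auto using belief_pba, belief_ba, in_B_lsum.
Qed.

Lemma shifted_bet_payoff_other I is h c j w : In j (others I is) -> in_B A (h j) ->
  integral A (t j w) (shifted_bet I is h c j) = c j - integral A (t j w) (h j).
Proof.
  intros Hj Hh. apply in_others in Hj. unfold shifted_bet.
  destruct (classic_eq_dec j is); [tauto|].
  apply integral_const_sub; auto using belief_pba, type_space_field.
Qed.

Lemma acceptable_bet_of_separating I is ws h : NoDup I -> In is I ->
  separating_family I is ws h -> exists f, acceptable_bet A t I f.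
Proof.
  intros HnD HisI (HhB & Hcommon & Hothers & Hstar).
  destruct (lsum_sup_le (others I is) (fun j w => integral A (t j w) (h j)) 0 ws
              (NoDup_remove_elt I is HnD) Hcommon) as (c & Hc & Hbound).
  exists (shifted_bet I is h c). apply acceptable_bet_of_nonneg.
  - apply shifted_bet_is_bet; auto.
  - intros w i Hi. destruct (classic_eq_dec i is) as [->|Hne].
    + rewrite shifted_bet_payoff_is by exact HhB.
      destruct (classic (eqA A (t is w) (t is ws))) as [Heq|Hne].
      * rewrite (lsum_ext_in _ _ (fun j => integral A (t is ws) (h j)))
          by (intros; apply integral_eqA, Heq). lra.
      * pose proof (Hothers w Hne). lra.
    + assert (Hj : In i (others I is)) by (apply in_others; auto).
      rewrite shifted_bet_payoff_other by auto.
      pose proof (Hbound i w Hj). lra.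
  - exists ws, is. split; auto. rewrite shifted_bet_payoff_is by exact HhB. lra.
Qed.

Section FarCone.
Variables (I : list N) (is : N) (ws : Omega) (fs : list (N * (Omega -> R))) (eps : R).
Hypothesis HnD : NoDup I.
Hypothesis Hfs : forall p, In p fs -> In (fst p) (others I is) /\ in_B A (snd p).
Hypothesis Heps : 0 < eps.
Hypothesis Hfar : forall y,
  consistency_set I is ws y ->
  exists p, In p fs /\ eps <= Rabs (integral A (t is ws) (snd p) - integral A (y (fst p)) (snd p)).

Definition test_player (k : nat) : N := fst (nth k fs (is, fun _ => 0)).
Definition test_fun (k : nat) : Omega -> R := snd (nth k fs (is, fun _ => 0)).

Definition test_vec (mu : N -> setfun Omega) : vec :=
  fun k => integral A (mu (test_player k)) (test_fun k).

Lemma test_spec k : (k < length fs)%nat -> In (test_player k) (others I is) /\ in_B A (test_fun k).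
Proof. intros Hk. apply Hfs, nth_In, Hk. Qed.

(* Test vectors of the unclosed elements of [consistency_set]: nonnegative
   combinations of joint beliefs of the others, minus nonnegative combinations
   of beliefs of [is] that differ from [t is ws]. *)
Definition test_cone (x : vec) : Prop :=
  exists (L1 : list (R * (N -> Omega))) (L2 : list (R * Omega)),
    (forall e, In e L1 -> 0 <= fst e) /\
    (forall e, In e L2 -> 0 <= fst e /\ ~ eqA A (t is (snd e)) (t is ws)) /\
    forall k, (k < length fs)%nat ->
      x k = lsum L1 (fun e => fst e * test_vec (fun j => t j (snd e j)) k)
            - lsum L2 (fun e => fst e * test_vec (fun _ => t is (snd e)) k).

Lemma test_cone_far x :
  test_cone x -> eps <= norm1 (length fs) (vsub (test_vec (fun _ => t is ws)) x).
Proof.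
  intros (L1 & L2 & HL1 & HL2 & Hx). pose proof type_space_field as HA.
  set (u := fun j => mcomb L1 (fun W : N -> Omega => t j (W j))).
  set (z := fun _ : N => mcomb L2 (t is)).
  assert (Hu : forall j g, in_B A g ->
             is_ba A (u j) /\
             integral A (u j) g = lsum L1 (fun e => fst e * integral A (t j (snd e j)) g))
    by (intros; apply mcomb_integral; auto using belief_ba).
  assert (Hz : forall j g, in_B A g ->
             is_ba A (z j) /\
             integral A (z j) g = lsum L2 (fun e => fst e * integral A (t is (snd e)) g))
    by (intros; apply mcomb_integral; auto using belief_ba).
  destruct (Hfar (fun j E => u j E - z j E)) as (p & Hp & Hpfar).
  { exists u, z. split; [|split; [|reflexivity]].
    - apply (mcomb_in_cone_prod A HA _ (fun j nu => exists w, nu = t j w)); auto.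
      + intros j nu [w ->]. apply belief_ba.
      + intros j e _ _. eauto.
    - apply mcomb_in_cone_diag; auto.
      + intros nu [w [-> _]]. apply belief_ba.
      + intros e He. destruct (HL2 e He). split; eauto. }
  destruct (In_nth fs p (is, fun _ => 0) Hp) as [k [Hk <-]].
  destruct (test_spec k Hk) as [_ Hg].
  eapply Rle_trans; [|apply lsum_term_le with (e := k); [intros; apply Rabs_pos|apply in_seq; lia]].
  unfold vsub. rewrite Hx by exact Hk.
  destruct (Hu (test_player k) _ Hg) as [Hub Huint].
  destruct (Hz (test_player k) _ Hg) as [Hzb Hzint].
  fold (test_player k) (test_fun k) in Hpfar.
  replace (fun E => u (test_player k) E - z (test_player k) E)
    with (fun E => 1 * u (test_player k) E + -1 * z (test_player k) E) in Hpfar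
    by (extensionality E; ring).
  rewrite integral_lin_mu, Huint, Hzint in Hpfar by auto.
  eapply Rle_trans; [exact Hpfar|]. right. f_equal. unfold test_vec. ring.
Qed.

Lemma test_cone_zero : test_cone vzero.
Proof.
  exists nil, nil. split; [simpl; tauto|split; [simpl; tauto|]].
  intros k _. unfold vzero. simpl. ring.
Qed.

Lemma test_cone_add x y : test_cone x -> test_cone y -> test_cone (vadd x y).
Proof.
  intros (L1 & L2 & H1 & H2 & Hx) (L1' & L2' & H1' & H2' & Hy).
  exists (L1 ++ L1'), (L2 ++ L2').
  split; [intros e He; apply in_app_or in He as [He|He]; auto|].
  split; [intros e He; apply in_app_or in He as [He|He]; auto|].
  intros k Hk. unfold vadd. rewrite Hx, Hy, !lsum_app by exact Hk. ring.
Qed.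

Lemma test_cone_scal s x : 0 < s -> test_cone x -> test_cone (vscal s x).
Proof.
  intros Hs (L1 & L2 & H1 & H2 & Hx).
  exists (map (fun e => (s * fst e, snd e)) L1), (map (fun e => (s * fst e, snd e)) L2).
  split; [|split].
  - intros e He. apply in_map_iff in He as [e' [<- He']]. simpl.
    specialize (H1 e' He'). nra.
  - intros e He. apply in_map_iff in He as [e' [<- He']]. simpl.
    destruct (H2 e' He'). split; auto. nra.
  - intros k Hk. unfold vscal. rewrite Hx, !lsum_map by exact Hk. simpl.
    rewrite Rmult_minus_distr_l, <- !lsum_scal.
    f_equal; apply lsum_ext_in; intros; ring.
Qed.

(* A functional on the test vectors, regrouped by the player owning each
   coordinate. *)
Definition split_fun (lam : vec) (j : N) : Omega -> R :=
  fun w => lsum (seq 0 (length fs))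
             (fun k => (if classic_eq_dec (test_player k) j then lam k else 0) * test_fun k w).

Lemma test_fun_in_B k : In k (seq 0 (length fs)) -> in_B A (test_fun k).
Proof. intros Hk. apply test_spec. apply in_seq in Hk. lia. Qed.

Lemma split_fun_in_B lam j : in_B A (split_fun lam j).
Proof.
  apply in_B_lsum; [apply type_space_field|]. intros k Hk.
  apply in_B_scal, test_fun_in_B, Hk.
Qed.

Lemma split_fun_integral lam j mu : is_ba A mu ->
  integral A mu (split_fun lam j)
  = lsum (seq 0 (length fs))
      (fun k => (if classic_eq_dec (test_player k) j then lam k else 0)
                * integral A mu (test_fun k)).
Proof.
  intros Hmu. pose proof type_space_field as HA. unfold split_fun.
  rewrite integral_lsum; auto.
  - apply lsum_ext_in. intros k Hk. apply integral_scal, test_fun_in_B; auto.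
  - intros k Hk. apply in_B_scal, test_fun_in_B, Hk.
Qed.

Lemma lsum_integral_split_fun lam (mu : N -> setfun Omega) : (forall j, is_ba A (mu j)) ->
  lsum (others I is) (fun j => integral A (mu j) (split_fun lam j))
  = dot (length fs) lam (test_vec mu).
Proof.
  intros Hmu.
  rewrite (lsum_ext_in _ _ (fun j => lsum (seq 0 (length fs))
      (fun k => (if classic_eq_dec (test_player k) j then lam k else 0)
                * integral A (mu j) (test_fun k))))
    by (intros j _; apply split_fun_integral, Hmu).
  apply (lsum_route _ _ test_player lam (fun j k => integral A (mu j) (test_fun k)));
    [apply NoDup_remove_elt, HnD|].
  intros k Hk. apply test_spec. apply in_seq in Hk. lia.
Qed.

Lemma separating_family_of_far : exists h, separating_family I is ws h.
Proof.
  destruct (cone_separation (length fs) test_cone (test_vec (fun _ => t is ws)) eps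
              test_cone_zero test_cone_add test_cone_scal Heps test_cone_far)
    as [lam [Hneg Hpos]].
  exists (split_fun lam). split; [|split; [|split]].
  - intros j _. apply split_fun_in_B.
  - intros W.
    rewrite (lsum_integral_split_fun lam (fun j => t j (W j))) by (intros; apply belief_ba).
    apply Hneg. exists ((1, W) :: nil), nil. split; [simpl; intros e [<-|[]]; simpl; lra|].
    split; [simpl; tauto|]. intros k _. simpl. ring.
  - intros w Hw.
    rewrite (lsum_integral_split_fun lam (fun _ => t is w)) by (intros; apply belief_ba).
    assert (Hc : test_cone (vscal (-1) (test_vec (fun _ => t is w)))).
    { exists nil, ((1, w) :: nil). split; [simpl; tauto|].
      split; [simpl; intros e [<-|[]]; simpl; split; [lra|exact Hw]|].
      intros k _. unfold vscal. simpl. ring. }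
    pose proof (Hneg _ Hc) as H. rewrite dot_scal in H. lra.
  - rewrite (lsum_integral_split_fun lam (fun _ => t is ws)) by (intros; apply belief_ba).
    exact Hpos.
Qed.
End FarCone.

Lemma not_strongly_consistent_far : ~ strongly_consistent A t ->
  exists I is ws (fs : list (N * (Omega -> R))) eps,
    NoDup I /\ In is I /\
    (forall p, In p fs -> In (fst p) (others I is) /\ in_B A (snd p)) /\ 0 < eps /\
    forall y,
      consistency_set I is ws y ->
      exists p, In p fs /\
        eps <= Rabs (integral A (t is ws) (snd p) - integral A (y (fst p)) (snd p)).
Proof.
  intros HnSC. unfold strongly_consistent in HnSC.
  apply not_all_ex_not in HnSC as [I HnSC]. apply imply_to_and in HnSC as [HnD HnSC].
  apply not_all_ex_not in HnSC as [is HnSC]. apply imply_to_and in HnSC as [HisI HnSC].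
  apply not_all_ex_not in HnSC as [ws HnSC]. cbv zeta in HnSC.
  apply not_and_or in HnSC as [Hba|HnSC]; [exfalso; apply Hba; intros; apply belief_ba|].
  apply not_all_ex_not in HnSC as [fs HnSC]. apply not_all_ex_not in HnSC as [eps HnSC].
  apply imply_to_and in HnSC as [Heps HnSC]. apply imply_to_and in HnSC as [Hfs Hno].
  rewrite Forall_forall in Hfs.
  exists I, is, ws, fs, eps. split; [auto|split; [auto|split; [|split; [auto|]]]].
  - intros p Hp. destruct (Hfs p Hp) as [HJ HB]. split; [apply in_others|]; auto.
  - intros y Hy. apply NNPP. intros Hnear. apply Hno. exists y. split; auto.
    rewrite Forall_forall. intros p Hp. apply Rnot_le_lt. intros Hle. apply Hnear. eauto.
Qed.
End TypeSpace.

Theorem theorem6 (N Omega : Type) (A : (Omega -> Prop) -> Prop)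
    (M : N -> (Omega -> Prop) -> Prop) (t : N -> Omega -> setfun Omega) :
  is_type_space A M t ->
  (strongly_consistent A t /\
     ~ (exists (I : list N) (f : N -> Omega -> R), acceptable_bet A t I f)) \/
  (~ strongly_consistent A t /\
     (exists (I : list N) (f : N -> Omega -> R), acceptable_bet A t I f)).
Proof.
  intros HT. destruct (classic (strongly_consistent A t)) as [Hsc|Hnsc].
  - left. split; [exact Hsc|]. intros Hbet.
    exact (bet_not_strongly_consistent A M t HT Hbet Hsc).
  - right. split; [exact Hnsc|].
    destruct (not_strongly_consistent_far A M t HT Hnsc)
      as (I & is & ws & fs & eps & HnD & HisI & Hfs & Heps & Hfar).
    destruct (separating_family_of_far A M t HT I is ws fs eps HnD Hfs Heps Hfar) as [h Hh].
    destruct (acceptable_bet_of_separating A M t HT I is ws h HnD HisI Hh) as [f Hf].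
    exists I, f. exact Hf.
Qed.
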